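(* Let $F(\lambda,x)=\lambda x(1-x)$ and, for $\lambda\in(0,4]$ and $x_1\in(0,1)$, let $S(\lambda,x_1)=\{x_n:n\ge1\}$ where $x_{n+1}=F(\lambda,x_n)$. (a) For $\lambda=1$ there is $\delta>0$ such that for all $x_1\in(0,\delta)$: $x_n\simeq n^{-1}$ as $n\to\infty$ and $\dim_BS(1,x_1)=\frac12$. (b) For $\lambda=3$, with $x_0=2/3$, there is $\delta>0$ such that for all $x_1$ with $0<|x_1-x_0|<\delta$: $|x_n-x_0|\simeq n^{-1/2}$ and $\dim_BS(3,x_1)=\frac23$. (c) For every $\lambda\in(0,4]\setminus\{1,3\}$ and every $x_1\in(0,1)$ such that $(x_n)$ converges, $\dim_BS(\lambda,x_1)=0$. (d) For $\lambda=1+\sqrt6$, let $A=\{a_1,a_2\}$ be the period-2 orbit of $F(1+\sqrt6,\cdot)$ (i.e. $a_1\ne a_2$, $F(a_1)=a_2$, $F(a_2)=a_1$). There is $\delta>0$ such that for all $x_1\notin A$ with $\mathrm{dist}(x_1,A)<\delta$: $\mathrm{dist}(x_n,A)\simeq n^{-1/2}$ and $\dim_BS(1+\sqrt6,x_1)=\frac23$. (e) For $\lambda=1+\sqrt8$, let $0<a_1<a_2<a_3<1$ be the points with $F(a_1)=a_2$, $F(a_2)=a_3$, $F(a_3)=a_1$ (fixed points of $F^3$). There is $\delta>0$ such that for every $x_1\in(a_1-\delta,a_1)\cup(a_2-\delta,a_2)\cup(a_3,a_3+\delta)$: $\mathrm{dist}(x_n,\{a_1,a_2,a_3\})\simeq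 n^{-1}$ and $\dim_BS(1+\sqrt8,x_1)=\frac12$. Moreover, all the sets $S(\lambda,x_1)$ in (a), (b), (d), (e) are Minkowski nondegenerate.
   Context: $\mathrm{dist}(x,A)$ is the Euclidean distance from $x$ to $A$. For sequences of positive reals, $a_n\simeq b_n$ as $n\to\infty$ means there exist constants $0<A\le B$ with $A\le a_n/b_n\le B$ for all $n$. For a bounded set $S\subset\mathbb{R}$ and $\varepsilon>0$, $S_\varepsilon=\{y: \mathrm{dist}(y,S)<\varepsilon\}$ and $|S_\varepsilon|$ is its Lebesgue measure. $\mathcal M^{*s}(S)=\limsup_{\varepsilon\to0}|S_\varepsilon|/\varepsilon^{1-s}$, $\mathcal M_*^{s}(S)=\liminf_{\varepsilon\to0}|S_\varepsilon|/\varepsilon^{1-s}$; $\overline{\dim}_BS=\inf\{s\ge0:\mathcal M^{*s}(S)=0\}$, $\underline{\dim}_BS=\inf\{s\ge0:\mathcal M_*^{s}(S)=0\}$, and $\dim_BS$ is their common value when equal. $S$ is Minkowski nondegenerate if there is $d\ge0$ with $0<\mathcal M_*^d(S)\le\mathcal M^{*d}(S)<\infty$. *)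

From Stdlib Require Import Reals List Classical ClassicalEpsilon.
Open Scope R_scope.

Definition F (lam x : R) : R := lam * x * (1 - x).

(* orbit lam x1 k = x_{k+1}, i.e. orbit lam x1 0 = x_1. *)
Fixpoint orbit (lam x1 : R) (k : nat) : R :=
  match k with
  | O => x1
  | S k' => F lam (orbit lam x1 k')
  end.

Definition xn (lam x1 : R) (n : nat) : R := orbit lam x1 (n - 1).

Definition Sset (lam x1 : R) : R -> Prop :=
  fun y => exists n : nat, (1 <= n)%nat /\ y = xn lam x1 n.

Definition asymp_equiv (a b : nat -> R) : Prop :=
  exists A B : R, 0 < A /\ A <= B /\
    forall n : nat, (1 <= n)%nat -> A <= a n / b n <= B.

(* S_eps = { y : dist(y,S) < eps }  (dist(y,S) < eps iff some s in S has |y-s| < eps) *)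
Definition nbhd (S : R -> Prop) (eps : R) : R -> Prop :=
  fun y => exists s, S s /\ Rabs (y - s) < eps.

(* Lebesgue measure of an open set U of R: the supremum of the total lengths
   of finite families of pairwise disjoint closed intervals contained in U. *)
Definition interval_sums (U : R -> Prop) : R -> Prop :=
  fun t => exists l : list (R * R),
    Forall (fun p => fst p <= snd p /\ forall y, fst p <= y <= snd p -> U y) l /\
    ForallOrdPairs (fun p q => snd p < fst q \/ snd q < fst p) l /\
    t = fold_right (fun p acc => (snd p - fst p) + acc) 0 l.

Definition open_measure (U : R -> Prop) : R :=
  epsilon (inhabits 0) (fun m => is_lub (interval_sums U) m).

Definition mink_ratio (S : R -> Prop) (s eps : R) : R :=
  open_measure (nbhd S eps) / Rpower eps (1 - s).

(* M^{*s}(S) = limsup_{eps->0+} ratio = 0   (ratio is nonnegative) *)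
Definition upper_mink_zero (S : R -> Prop) (s : R) : Prop :=
  forall eta, 0 < eta -> exists eps0, 0 < eps0 /\
    forall eps, 0 < eps < eps0 -> mink_ratio S s eps < eta.

(* M_*^s(S) = liminf_{eps->0+} ratio = 0 *)
Definition lower_mink_zero (S : R -> Prop) (s : R) : Prop :=
  forall eta, 0 < eta -> forall eps0, 0 < eps0 ->
    exists eps, 0 < eps < eps0 /\ mink_ratio S s eps < eta.

Definition is_inf (E : R -> Prop) (m : R) : Prop :=
  (forall x, E x -> m <= x) /\ (forall b, (forall x, E x -> b <= x) -> b <= m).

Definition upper_box_dim (S : R -> Prop) (d : R) : Prop :=
  is_inf (fun s => 0 <= s /\ upper_mink_zero S s) d.

Definition lower_box_dim (S : R -> Prop) (d : R) : Prop :=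
  is_inf (fun s => 0 <= s /\ lower_mink_zero S s) d.

Definition box_dim (S : R -> Prop) (d : R) : Prop :=
  upper_box_dim S d /\ lower_box_dim S d.

(* Minkowski nondegenerate: exists d >= 0 with 0 < M_*^d(S) <= M^{*d}(S) < oo,
   i.e. the ratio is eventually (as eps -> 0+) bounded between two positive constants. *)
Definition mink_nondegenerate (S : R -> Prop) : Prop :=
  exists d, 0 <= d /\ exists c C eps0, 0 < c /\ 0 < eps0 /\
    forall eps, 0 < eps < eps0 -> c <= mink_ratio S d eps <= C.

Definition dist2 (x a1 a2 : R) : R := Rmin (Rabs (x - a1)) (Rabs (x - a2)).
Definition dist3 (x a1 a2 a3 : R) : R :=
  Rmin (Rabs (x - a1)) (Rmin (Rabs (x - a2)) (Rabs (x - a3))).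

From Stdlib Require Import Reals Lra Lia List ClassicalEpsilon ZArith.
Open Scope R_scope.

(** The dimension statements reduce to two-sided estimates of the
    Lebesgue measure of the [eps]-neighbourhood of [{x_n}], which we compute
    from finite interval families ([open_measure] is bounded above by any
    finite cover and below by any disjoint family inside the set).  If the
    orbit approaches a finite set at rate [n^(-a)] and a return subsequence
    has gaps of order [k^(-(1+a))], then the measure is comparable to
    [eps^(a/(1+a))], i.e. the box dimension is [1/(1+a)] and the set is
    Minkowski nondegenerate ([box_dim_power_rate]).

    The rates come from normal forms at the cycle: an iterate behaves like
    [u - K u^2] (multiplier [+1], rate [1/n]) or [u - K u^3] (multiplier [-1]
    after squaring, rate [n^(-1/2)]), and iterating these gives linear growth
    of [1/u] or [1/u^2] ([quadratic_escape], [cubic_escape]).  Near the cycle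
    one step of [F] is bi-Lipschitz for the distance to the cycle, which
    transfers the rate from the returns to the whole orbit
    ([orbit_tracks_cycle], [harmonic_of_blocks]).  Parts (a), (b), (d), (e)
    instantiate this with explicit Taylor expansions ([cubic_neutral_orbit],
    [flip_cycle_rate], [one_sided_cycle_rate]); part (c) uses instead that a
    hyperbolic fixed point is approached geometrically, which gives
    dimension 0.  The algebra specific to [lam = 1 + sqrt 6] and
    [lam = 1 + sqrt 8] locates the cycles and computes their multipliers. *)

(** * Measure of open sets through finite interval families *)

(** A pair [p] is read as the closed interval [[fst p, snd p]]; it is
    well formed when its endpoints are ordered. *)
Definition wf_interval (p : R * R) : Prop := fst p <= snd p.

Definition total_length (L : list (R * R)) : R :=
  fold_right (fun p acc => (snd p - fst p) + acc) 0 L.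

Definition length_below (p : R * R) (t : R) : R :=
  Rmin (Rmax t (fst p)) (snd p) - fst p.

(** Total length of the parts of the intervals of [L] lying to the left of [t];
    a nondecreasing function of [t] whose increments control covered lengths. *)
Definition family_below (L : list (R * R)) (t : R) : R :=
  fold_right (fun p acc => length_below p t + acc) 0 L.

Lemma length_below_mono p t1 t2 :
  wf_interval p -> t1 <= t2 -> length_below p t1 <= length_below p t2.
Proof. unfold wf_interval, length_below, Rmin, Rmax; intros; repeat destruct Rle_dec; lra. Qed.

Lemma length_below_range p t :
  wf_interval p -> 0 <= length_below p t <= snd p - fst p.
Proof. unfold wf_interval, length_below, Rmin, Rmax; intros; repeat destruct Rle_dec; lra. Qed.

Lemma length_below_inside p t :
  fst p <= t <= snd p -> length_below p t = t - fst p.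
Proof. unfold length_below, Rmin, Rmax; intros; repeat destruct Rle_dec; lra. Qed.

Lemma family_below_mono L t1 t2 :
  Forall wf_interval L -> t1 <= t2 -> family_below L t1 <= family_below L t2.
Proof.
  induction L as [|p L IH]; simpl; intros HF Ht; [lra|].
  apply Forall_cons_iff in HF as [Hp HFL].
  pose proof (length_below_mono p t1 t2 Hp Ht). specialize (IH HFL Ht). lra.
Qed.

Lemma family_below_member L p t1 t2 :
  Forall wf_interval L -> In p L -> t1 <= t2 ->
  length_below p t2 - length_below p t1 <= family_below L t2 - family_below L t1.
Proof.
  induction L as [|q L IH]; simpl; intros HF Hin Ht; [contradiction|].
  apply Forall_cons_iff in HF as [Hq HFL]. destruct Hin as [<-|Hin].
  - pose proof (family_below_mono L t1 t2 HFL Ht). lra.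
  - pose proof (length_below_mono q t1 t2 Hq Ht). specialize (IH HFL Hin Ht). lra.
Qed.

Lemma family_below_range L t :
  Forall wf_interval L -> 0 <= family_below L t <= total_length L.
Proof.
  induction L as [|p L IH]; simpl; intros HF; [lra|].
  apply Forall_cons_iff in HF as [Hp HFL].
  pose proof (length_below_range p t Hp). specialize (IH HFL). lra.
Qed.

(** Induction on
    the size of [I]: the interval containing [b] either contains [a] or
    reduces the problem to [[a, fst p]] with one interval fewer. *)
Lemma covered_segment_length L :
  Forall wf_interval L -> forall n (I : list (R * R)), (length I <= n)%nat -> incl I L ->
  forall a b, a <= b -> (forall y, a <= y <= b -> exists p, In p I /\ fst p < y < snd p) ->
  b - a <= family_below L b - family_below L a.
Proof.
  intros HF n. induction n as [|n IH]; intros I HI Hinc a b Hab Hcov.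
  - destruct I; [|simpl in HI; lia].
    destruct (Hcov b) as [p [Hp _]]; [lra|]. contradiction.
  - destruct (Hcov b) as [p [Hp Hpb]]; [lra|].
    assert (HpL : In p L) by (apply Hinc; auto).
    pose proof (proj1 (Forall_forall wf_interval L) HF p HpL) as Hwf.
    destruct (Rlt_or_le (fst p) a) as [Hlt|Hle].
    + pose proof (family_below_member L p a b HF HpL Hab) as H.
      rewrite (length_below_inside p a), (length_below_inside p b) in H by lra. lra.
    + destruct (in_split p I Hp) as [I1 [I2 HI12]].
      assert (Hleft : fst p - a <= family_below L (fst p) - family_below L a).
      { apply (IH (I1 ++ I2)).
        - subst I. rewrite length_app in *. simpl in HI. lia.
        - intros q Hq. apply Hinc. subst I. apply in_or_app. apply in_app_or in Hq.
          destruct Hq; [left|right; right]; auto.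
        - lra.
        - intros y Hy. destruct (Hcov y) as [q [Hq Hqy]]; [lra|].
          exists q. split; auto. subst I. apply in_app_or in Hq. apply in_or_app.
          destruct Hq as [Hq|[Hq|Hq]]; auto. subst q. lra. }
      pose proof (family_below_member L p (fst p) b HF HpL ltac:(lra)) as H.
      rewrite (length_below_inside p (fst p)), (length_below_inside p b) in H by lra. lra.
Qed.

Definition disjoint_intervals (p q : R * R) : Prop := snd p < fst q \/ snd q < fst p.

Lemma Forall_filter_sub {A} (P : A -> Prop) f l : Forall P l -> Forall P (filter f l).
Proof.
  induction l; simpl; intros H; auto. inversion H; subst. destruct (f a); auto.
Qed.

Lemma ForallOrdPairs_filter {A} (P : A -> A -> Prop) f l :
  ForallOrdPairs P l -> ForallOrdPairs P (filter f l).
Proof.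
  induction l; simpl; intros H; auto. inversion H; subst. destruct (f a); auto.
  constructor; auto. apply Forall_filter_sub; auto.
Qed.

Lemma filter_length_le {A} f (l : list A) : (length (filter f l) <= length l)%nat.
Proof. induction l; simpl; auto. destruct (f a); simpl; lia. Qed.

Section DisjointIncrements.
Variable g : R -> R.
Hypothesis g_mono : forall x y, x <= y -> g x <= g y.

Definition increment_sum (l : list (R * R)) : R :=
  fold_right (fun p acc => g (snd p) - g (fst p) + acc) 0 l.

Lemma increment_sum_split f l :
  increment_sum l = increment_sum (filter f l) + increment_sum (filter (fun q => negb (f q)) l).
Proof. induction l; simpl; [lra|]. destruct (f a); simpl; rewrite IHl; lra. Qed.

(** Increments of a nondecreasing function over pairwise disjoint intervals
    inside [[lo, hi]] add up to at most its increment over [[lo, hi]]: split the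
    family at its first member into the intervals to its left and to its right. *)
Lemma disjoint_increments_le n : forall l, (length l <= n)%nat -> forall lo hi, lo <= hi ->
  Forall (fun p => lo <= fst p /\ fst p <= snd p /\ snd p <= hi) l ->
  ForallOrdPairs disjoint_intervals l -> increment_sum l <= g hi - g lo.
Proof.
  induction n as [|n IH]; intros l Hl lo hi Hlh HF HD.
  - destruct l; [|simpl in Hl; lia]. simpl. pose proof (g_mono _ _ Hlh). lra.
  - destruct l as [|p t]; simpl. { pose proof (g_mono _ _ Hlh). lra. }
    apply Forall_cons_iff in HF as [Hp HFt]. inversion HD as [|? ? Hpt HDt]; subst. simpl in Hl.
    set (left_of_p := fun q : R * R => if Rlt_dec (snd q) (fst p) then true else false).
    rewrite (increment_sum_split left_of_p t).
    assert (Hleft : increment_sum (filter left_of_p t) <= g (fst p) - g lo).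
    { apply IH. - pose proof (filter_length_le left_of_p t). lia. - lra.
      - apply Forall_forall. intros q Hq. apply filter_In in Hq as [Hq Hfq].
        pose proof (proj1 (Forall_forall _ _) HFt q Hq). unfold left_of_p in Hfq.
        destruct Rlt_dec; [|discriminate]. lra.
      - apply ForallOrdPairs_filter; auto. }
    assert (Hright : increment_sum (filter (fun q => negb (left_of_p q)) t) <= g hi - g (snd p)).
    { apply IH. - pose proof (filter_length_le (fun q => negb (left_of_p q)) t). lia. - lra.
      - apply Forall_forall. intros q Hq. apply filter_In in Hq as [Hq Hfq].
        pose proof (proj1 (Forall_forall _ _) HFt q Hq).
        pose proof (proj1 (Forall_forall _ _) Hpt q Hq) as Hdisj. unfold left_of_p in Hfq.
        destruct Rlt_dec; [discriminate|]. unfold disjoint_intervals in Hdisj. lra.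
      - apply ForallOrdPairs_filter; auto. }
    lra.
Qed.
End DisjointIncrements.

Definition endpoint_bound (l : list (R * R)) : R :=
  fold_right (fun p acc => Rabs (fst p) + Rabs (snd p) + acc) 0 l.

Lemma endpoint_bound_pos l : 0 <= endpoint_bound l.
Proof.
  induction l; simpl; [lra|].
  pose proof (Rabs_pos (fst a)); pose proof (Rabs_pos (snd a)); lra.
Qed.

Lemma endpoint_bound_member l p : In p l -> Rabs (fst p) + Rabs (snd p) <= endpoint_bound l.
Proof.
  induction l as [|q l IH]; simpl; intros H; [contradiction|].
  pose proof (endpoint_bound_pos l).
  destruct H as [<-|H]; [lra|]. specialize (IH H).
  pose proof (Rabs_pos (fst q)); pose proof (Rabs_pos (snd q)); lra.
Qed.

Definition covers (U : R -> Prop) (L : list (R * R)) : Prop :=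
  forall y, U y -> exists p, In p L /\ fst p < y < snd p.

(** Every disjoint family of closed intervals inside [U] is shorter than any
    finite cover of [U]: each member is covered by the cover (so its length is
    an increment of [family_below L]), and disjoint increments add up to at
    most the total length of [L]. *)
Lemma interval_sums_le_cover U L t :
  Forall wf_interval L -> covers U L -> interval_sums U t -> t <= total_length L.
Proof.
  intros HL Hc [l [HF [HD ->]]].
  set (M := endpoint_bound l).
  assert (Hinc : total_length l <= increment_sum (family_below L) l).
  { clear HD M. induction l as [|p l IH]; simpl; [lra|].
    apply Forall_cons_iff in HF as [[Hp HU] HFl]. specialize (IH HFl).
    pose proof (covered_segment_length L HL (length L) L (le_n _) (incl_refl _)
      (fst p) (snd p) Hp (fun y Hy => Hc y (HU y Hy))). lra. }
  assert (HM : 0 <= M) by apply endpoint_bound_pos.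
  assert (Hdisj : increment_sum (family_below L) l <= family_below L M - family_below L (- M)).
  { apply (disjoint_increments_le (family_below L)
      (fun x y H => family_below_mono L x y HL H) (length l)); auto; [lra|].
    apply Forall_forall. intros p Hp. pose proof (endpoint_bound_member l p Hp).
    pose proof (proj1 (Forall_forall _ _) HF p Hp) as [Hp1 _].
    unfold M. pose proof (Rle_abs (fst p)). pose proof (Rle_abs (snd p)).
    pose proof (Rabs_pos (fst p)); pose proof (Rabs_pos (snd p)).
    pose proof (Rabs_Ropp (fst p)). pose proof (Rle_abs (- fst p)). split; [|split]; lra. }
  change (total_length l <= total_length L).
  pose proof (family_below_range L M HL). pose proof (family_below_range L (- M) HL). lra.
Qed.

(** For a set with a finite cover, [open_measure] really is the supremum of
    the interval sums (the chosen witness of [epsilon] exists). *)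
Lemma open_measure_is_lub U L :
  Forall wf_interval L -> covers U L -> is_lub (interval_sums U) (open_measure U).
Proof.
  intros HL Hc. unfold open_measure. apply epsilon_spec.
  destruct (completeness (interval_sums U)) as [m Hm].
  - exists (total_length L). intros t Ht. eapply interval_sums_le_cover; eauto.
  - exists 0. exists nil. repeat split; auto. constructor.
  - exists m; auto.
Qed.

Lemma open_measure_le_cover U L :
  Forall wf_interval L -> covers U L -> open_measure U <= total_length L.
Proof.
  intros HL Hc. pose proof (open_measure_is_lub U L HL Hc) as [_ H]. apply H.
  intros t Ht. eapply interval_sums_le_cover; eauto.
Qed.

Lemma open_measure_ge U L t :
  Forall wf_interval L -> covers U L -> interval_sums U t -> t <= open_measure U.
Proof. intros HL Hc Ht. pose proof (open_measure_is_lub U L HL Hc) as [H _]. apply H; auto. Qed.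

Lemma Rabs_le_bounds x r : Rabs x <= r -> -r <= x <= r.
Proof. unfold Rabs; destruct Rcase_abs; intros; lra. Qed.

Lemma Rpower_pos x y : 0 < Rpower x y.
Proof. unfold Rpower; apply exp_pos. Qed.

Lemma Rpower_ge1 x y : 0 < x < 1 -> y <= 0 -> 1 <= Rpower x y.
Proof.
  intros Hx Hy. unfold Rpower. assert (ln x < 0).
  { rewrite <- ln_1. apply ln_increasing; lra. }
  pose proof (exp_ineq1_le (y * ln x)). assert (0 <= y * ln x) by nra. lra.
Qed.

Lemma Rpower_small x y eta :
  0 < y -> 0 < eta -> 0 < x -> x < exp (ln eta / y) -> Rpower x y < eta.
Proof.
  intros Hy He Hx Hlt. unfold Rpower.
  assert (Hln : ln x < ln eta / y).
  { rewrite <- (ln_exp (ln eta / y)). apply ln_increasing; auto. }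
  rewrite <- (exp_ln eta He). apply exp_increasing.
  apply (Rmult_lt_compat_l y) in Hln; auto. field_simplify in Hln; lra.
Qed.

Lemma Rpower_neg_antimono x y c : 0 < x <= y -> 0 <= c -> Rpower y (- c) <= Rpower x (- c).
Proof.
  intros Hxy Hc. rewrite !Rpower_Ropp. apply Rinv_le_contravar. apply Rpower_pos.
  apply Rle_Rpower_l; auto.
Qed.

Lemma Rpower_exp_antimono x u v : 0 < x <= 1 -> u <= v -> Rpower x v <= Rpower x u.
Proof.
  intros Hx Huv. unfold Rpower. destruct (Req_dec x 1) as [->|Hn].
  - rewrite ln_1. rewrite !Rmult_0_r. lra.
  - assert (ln x < 0). { rewrite <- ln_1. apply ln_increasing; lra. }
    destruct (Req_dec u v) as [->|]; [lra|]. left. apply exp_increasing. nra.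
Qed.

Lemma Rpower_inv_base x y : 0 < x -> Rpower (/ x) y = Rpower x (- y).
Proof. intros Hx. unfold Rpower. rewrite ln_Rinv by auto. f_equal; ring. Qed.

Lemma Rpower_mul_base x u : 0 < x -> x * Rpower x u = Rpower x (1 + u).
Proof. intros Hx. rewrite Rpower_plus, Rpower_1; auto. Qed.

Lemma floor_nat X : 0 <= X -> exists K : nat, INR K <= X < INR K + 1.
Proof.
  intros HX. destruct (archimed X) as [H1 H2].
  assert (Hz : (0 < up X)%Z). { apply lt_IZR. lra. }
  exists (Z.to_nat (up X - 1)). rewrite INR_IZR_INZ. rewrite Z2Nat.id by lia.
  rewrite minus_IZR. simpl. lra.
Qed.

Lemma ceil_nat X : 0 <= X -> exists N : nat, X <= INR N <= X + 1 /\ (1 <= N)%nat.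
Proof.
  intros HX. destruct (floor_nat X HX) as [K HK]. exists (S K). rewrite S_INR. split; [lra|lia].
Qed.

Lemma mink_ratio_shift S d s eps : 0 < eps ->
  mink_ratio S s eps = mink_ratio S d eps * Rpower eps (s - d).
Proof.
  intros He. unfold mink_ratio.
  replace (1 - d) with ((1 - s) + (s - d)) by ring. rewrite Rpower_plus.
  pose proof (Rpower_pos eps (1 - s)). pose proof (Rpower_pos eps (s - d)). field. lra.
Qed.

Lemma upper_to_lower_zero S s : upper_mink_zero S s -> lower_mink_zero S s.
Proof.
  intros H eta Heta eps0 Heps0. destruct (H eta Heta) as [e1 [He1 Hr]].
  exists (Rmin eps0 e1 / 2). unfold Rmin; destruct Rle_dec; split; [split| |split|]; try lra;
  apply Hr; lra.
Qed.

Lemma upper_zero_above S d C e0 : 0 < e0 -> 0 < C ->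
  (forall eps, 0 < eps < e0 -> mink_ratio S d eps <= C) ->
  forall s, d < s -> upper_mink_zero S s.
Proof.
  intros He0 HC Hb s Hs eta Heta.
  set (e1 := Rmin (Rmin e0 1) (exp (ln (eta / C) / (s - d)))).
  assert (He1 : 0 < e1).
  { unfold e1. apply Rmin_pos; [apply Rmin_pos; lra|apply exp_pos]. }
  exists e1. split; auto. intros eps [Heps Heps1].
  assert (Heps2 : eps < e0 /\ eps < exp (ln (eta / C) / (s - d))).
  { unfold e1, Rmin in Heps1. repeat destruct Rle_dec; lra. }
  rewrite (mink_ratio_shift S d s eps Heps).
  assert (Hp : Rpower eps (s - d) < eta / C).
  { apply Rpower_small; try lra. apply Rdiv_lt_0_compat; lra. }
  pose proof (Rpower_pos eps (s - d)). pose proof (Hb eps ltac:(lra)).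
  apply Rle_lt_trans with (C * Rpower eps (s - d)). apply Rmult_le_compat_r; lra.
  apply (Rmult_lt_compat_l C) in Hp; auto.
  replace (C * (eta / C)) with eta in Hp by (field; lra). lra.
Qed.

Lemma lower_nonzero_below S d c e0 : 0 < e0 -> 0 < c ->
  (forall eps, 0 < eps < e0 -> c <= mink_ratio S d eps) ->
  forall s, s <= d -> ~ lower_mink_zero S s.
Proof.
  intros He0 Hc Hb s Hs Hl. destruct (Hl c Hc (Rmin e0 1)) as [eps [[Heps Heps1] Hr]].
  { apply Rmin_pos; lra. }
  assert (Heps2 : eps < e0 /\ eps < 1) by (unfold Rmin in Heps1; destruct Rle_dec; lra).
  rewrite (mink_ratio_shift S d s eps Heps) in Hr.
  pose proof (Hb eps ltac:(lra)).
  pose proof (Rpower_ge1 eps (s - d) ltac:(lra) ltac:(lra)).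
  assert (c * 1 <= mink_ratio S d eps * Rpower eps (s - d)) by (apply Rmult_le_compat; lra).
  lra.
Qed.

Lemma box_dim_of_ratio_bounds S d c C e0 : 0 <= d -> 0 < c -> 0 < e0 ->
  (forall eps, 0 < eps < e0 -> c <= mink_ratio S d eps <= C) ->
  box_dim S d /\ mink_nondegenerate S.
Proof.
  intros Hd Hc He0 Hb.
  assert (HC : 0 < C) by (destruct (Hb (e0 / 2)) as [H1 H2]; lra).
  pose proof (upper_zero_above S d C e0 He0 HC (fun eps H => proj2 (Hb eps H))) as Hup.
  pose proof (lower_nonzero_below S d c e0 He0 Hc (fun eps H => proj1 (Hb eps H))) as Hlow.
  split; [split; split|].
  - intros s [Hs Hu]. destruct (Rle_or_lt d s); auto.
    exfalso. apply (Hlow s); [lra|]. apply upper_to_lower_zero; auto.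
  - intros b Hbd. destruct (Rle_or_lt b d); auto.
    assert (b <= (d + b) / 2) by (apply Hbd; split; [lra|]; apply Hup; lra). lra.
  - intros s [Hs Hu]. destruct (Rle_or_lt d s); auto.
    exfalso. apply (Hlow s); [lra|]. auto.
  - intros b Hbd. destruct (Rle_or_lt b d); auto.
    assert (b <= (d + b) / 2).
    { apply Hbd. split; [lra|]. apply upper_to_lower_zero, Hup. lra. } lra.
  - exists d. split; auto. exists c, C, e0. split; auto.
Qed.

Lemma box_dim_zero S : (forall s, 0 < s -> upper_mink_zero S s) -> box_dim S 0.
Proof.
  intros H. split; split.
  - intros s [Hs _]; auto.
  - intros b Hb. destruct (Rle_or_lt b 0); auto.
    assert (b <= b / 2) by (apply Hb; split; [lra|]; apply H; lra). lra.
  - intros s [Hs _]; auto.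
  - intros b Hb. destruct (Rle_or_lt b 0); auto.
    assert (b <= b / 2) by (apply Hb; split; [lra|]; apply upper_to_lower_zero, H; lra). lra.
Qed.

Definition seq_range (u : nat -> R) : R -> Prop :=
  fun y => exists n : nat, (1 <= n)%nat /\ y = u n.

(** The cover of the [eps]-neighbourhood of [seq_range u] by [eps]-intervals
    around [u 0, ..., u (N-1)] and [(r + eps)]-intervals around the points of
    [P], which capture the tail of [u]. *)
Definition range_cover (u : nat -> R) (P : list R) (N : nat) (r eps : R) : list (R * R) :=
  map (fun n => (u n - eps, u n + eps)) (seq 0 N) ++
  map (fun p => (p - r - eps, p + r + eps)) P.

Lemma total_length_app l1 l2 : total_length (l1 ++ l2) = total_length l1 + total_length l2.
Proof. induction l1; simpl; [lra|]. rewrite IHl1; lra. Qed.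

Lemma total_length_const {A} (f g : A -> R) w (l : list A) : (forall x, g x - f x = w) ->
  total_length (map (fun x => (f x, g x)) l) = INR (length l) * w.
Proof.
  intros H. induction l; simpl; [lra|]. rewrite IHl, H. destruct (length l); simpl; lra.
Qed.

Lemma range_cover_wf u P N r eps : 0 <= r -> 0 < eps -> Forall wf_interval (range_cover u P N r eps).
Proof.
  intros Hr He. apply Forall_forall. intros q Hq. unfold range_cover in Hq.
  apply in_app_or in Hq. unfold wf_interval.
  destruct Hq as [Hq|Hq]; apply in_map_iff in Hq as [z [<- _]]; simpl; lra.
Qed.

Lemma range_cover_covers u P N r eps : 0 <= r ->
  (forall n, (N <= n)%nat -> exists p, In p P /\ Rabs (u n - p) <= r) ->
  covers (nbhd (seq_range u) eps) (range_cover u P N r eps).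
Proof.
  intros Hr HP y [s [[n [Hn ->]] Hys]]. unfold range_cover.
  apply Rabs_def2 in Hys.
  destruct (Nat.lt_ge_cases n N) as [Hlt|Hge].
  - exists (u n - eps, u n + eps). split; [|simpl; lra].
    apply in_or_app. left. apply in_map_iff. exists n. split; auto. apply in_seq. lia.
  - destruct (HP n Hge) as [p [Hp Hnp]]. exists (p - r - eps, p + r + eps). split.
    + apply in_or_app. right. apply in_map_iff. exists p; auto.
    + simpl. apply Rabs_le_bounds in Hnp. lra.
Qed.

Lemma nbhd_measure_upper u P N r eps : 0 <= r -> 0 < eps ->
  (forall n, (N <= n)%nat -> exists p, In p P /\ Rabs (u n - p) <= r) ->
  open_measure (nbhd (seq_range u) eps)
    <= 2 * eps * INR N + INR (length P) * (2 * r + 2 * eps).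
Proof.
  intros Hr He HP. apply Rle_trans with (total_length (range_cover u P N r eps)).
  - apply open_measure_le_cover; [apply range_cover_wf; auto|apply range_cover_covers; eauto].
  - unfold range_cover. rewrite total_length_app.
    rewrite (total_length_const (fun n => u n - eps) (fun n => u n + eps) (2 * eps)) by (intros; ring).
    rewrite (total_length_const (fun p => p - r - eps) (fun p => p + r + eps) (2 * r + 2 * eps))
      by (intros; ring).
    rewrite length_seq. lra.
Qed.

Lemma ForallOrdPairs_map_seq {A} (P : A -> A -> Prop) (f : nat -> A) K : forall a,
  (forall j k, (a <= j < k)%nat -> (k < a + K)%nat -> P (f j) (f k)) ->
  ForallOrdPairs P (map f (seq a K)).
Proof.
  induction K as [|K IH]; intros a H; simpl; constructor.
  - apply Forall_forall. intros q Hq. apply in_map_iff in Hq as [k [<- Hk]].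
    apply in_seq in Hk. apply H; lia.
  - apply IH. intros j k Hj Hk. apply H; lia.
Qed.

(** Lower bound: [K] points of the range that are pairwise more than [eps]
    apart carry disjoint [eps/2]-intervals inside the neighbourhood. *)
Lemma nbhd_measure_lower u (e : nat -> R) K eps L : 0 < eps -> Forall wf_interval L ->
  covers (nbhd (seq_range u) eps) L ->
  (forall k, seq_range u (e k)) ->
  (forall j k, (j < k < K)%nat -> eps < Rabs (e j - e k)) ->
  INR K * eps <= open_measure (nbhd (seq_range u) eps).
Proof.
  intros He HL Hc HS Hsep. apply (open_measure_ge _ L); auto.
  exists (map (fun k => (e k - eps / 2, e k + eps / 2)) (seq 0 K)). split; [|split].
  - apply Forall_forall. intros q Hq. apply in_map_iff in Hq as [k [<- _]]. simpl.
    split; [lra|]. intros y Hy. exists (e k). split; auto. apply Rabs_def1; lra.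
  - apply ForallOrdPairs_map_seq. intros j k Hj Hk. simpl.
    pose proof (Hsep j k ltac:(lia)) as Hjk.
    unfold disjoint_intervals; simpl. destruct (Rle_or_lt 0 (e j - e k)).
    + rewrite Rabs_right in Hjk by lra. right; lra.
    + rewrite Rabs_left in Hjk by lra. left; lra.
  - change (INR K * eps = total_length (map (fun k => (e k - eps / 2, e k + eps / 2)) (seq 0 K))).
    rewrite (total_length_const (fun k => e k - eps / 2) (fun k => e k + eps / 2) eps (seq 0 K))
      by (intros; field). rewrite length_seq. reflexivity.
Qed.

(** * Box dimension of a sequence converging at a power rate *)

Lemma monotone_gap_le (e : nat -> R) s : s * s = 1 ->
  (forall k, 0 <= s * (e k - e (S k))) ->
  forall j k, (j < k)%nat -> s * (e j - e (S j)) <= Rabs (e j - e k).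
Proof.
  intros Hs Hnn j k Hjk.
  assert (Htel : forall m, s * (e j - e (S j)) <= s * (e j - e (S (j + m)))).
  { induction m as [|m IH].
    - rewrite Nat.add_0_r. lra.
    - replace (S (j + S m)) with (S (S (j + m))) by lia.
      specialize (Hnn (S (j + m))). lra. }
  specialize (Htel (k - S j)%nat). replace (S (j + (k - S j))) with k in Htel by lia.
  assert (s = 1 \/ s = -1) as [-> | ->] by nra; unfold Rabs; destruct Rcase_abs; lra.
Qed.

Section PowerRate.
Variables (u : nat -> R) (P : list R) (a B G s : R) (e : nat -> R).
Hypotheses (Ha : 0 < a) (HB : 0 < B) (HG : 0 < G) (Hs : s * s = 1).
Hypothesis tail_close : forall n, (1 <= n)%nat ->
  exists p, In p P /\ Rabs (u n - p) <= B * Rpower (INR n) (- a).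
Hypothesis e_in_range : forall k, seq_range u (e k).
Hypothesis e_gaps : forall k, G * Rpower (INR (S k)) (- (1 + a)) <= s * (e k - e (S k)).

Let d := 1 / (1 + a).

Lemma power_rate_exponent : 0 < d < 1 /\ d * (1 + a) = 1.
Proof.
  unfold d. split; [split|].
  - apply Rdiv_lt_0_compat; lra.
  - apply (Rmult_lt_reg_r (1 + a)); [lra|]. field_simplify; lra.
  - field; lra.
Qed.

Lemma tail_close_unit : forall n, (1 <= n)%nat -> exists p, In p P /\ Rabs (u n - p) <= B.
Proof.
  intros n Hn. destruct (tail_close n Hn) as [p [Hp Hnp]]. exists p. split; auto.
  assert (Rpower (INR n) (- a) <= 1).
  { rewrite Rpower_Ropp. assert (1 <= INR n) by (apply (le_INR 1); auto).
    assert (1 <= Rpower (INR n) a).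
    { rewrite <- (Rpower_O (INR n)) by lra. apply Rle_Rpower; lra. }
    rewrite <- Rinv_1. apply Rinv_le_contravar; lra. }
  pose proof (Rpower_pos (INR n) (- a)). nra.
Qed.

(** The first [K] terms of [e] are [eps]-separated as long as
    [K <= (G / (2 eps))^d]: the gap after [e j] is at least [G K^(-(1+a))]. *)
Lemma power_rate_separation eps K : 0 < eps -> INR K <= Rpower (G / (2 * eps)) d ->
  forall j k, (j < k < K)%nat -> eps < Rabs (e j - e k).
Proof.
  intros Heps HK j k Hjk. destruct power_rate_exponent as [Hd Hda].
  assert (Hnn : forall k, 0 <= s * (e k - e (S k))).
  { intros k0. pose proof (e_gaps k0). pose proof (Rpower_pos (INR (S k0)) (- (1 + a))).
    assert (0 <= G * Rpower (INR (S k0)) (- (1 + a))) by (apply Rmult_le_pos; lra). lra. }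
  pose proof (monotone_gap_le e s Hs Hnn j k ltac:(lia)).
  pose proof (e_gaps j).
  assert (HjK : INR (S j) <= INR K) by (apply le_INR; lia).
  assert (2 * eps <= G * Rpower (INR (S j)) (- (1 + a))).
  { apply Rle_trans with (G * Rpower (Rpower (G / (2 * eps)) d) (- (1 + a))).
    - rewrite Rpower_mult. replace (d * - (1 + a)) with (- (1)) by nra.
      rewrite Rpower_Ropp, Rpower_1. field_simplify; lra.
      apply Rdiv_lt_0_compat; lra.
    - apply Rmult_le_compat_l; [lra|]. apply Rpower_neg_antimono; [|lra].
      split; [rewrite S_INR; pose proof (pos_INR j); lra|lra]. }
  lra.
Qed.

(** Lower bound: about [(G / (2 eps))^d] disjoint [eps]-intervals fit in the
    neighbourhood, which gives measure of order [eps^(1-d)]. *)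
Lemma power_rate_ratio_lower eps :
  0 < eps < Rmin 1 (G / (2 * Rpower 2 (1 + a))) ->
  (1 / 2) * Rpower (G / 2) d <= mink_ratio (seq_range u) d eps.
Proof.
  intros [Heps Heps0]. destruct power_rate_exponent as [Hd Hda].
  assert (Heps1 : eps < G / (2 * Rpower 2 (1 + a))) by (pose proof (Rmin_r 1 (G / (2 * Rpower 2 (1 + a)))); lra).
  pose proof (Rpower_pos eps (1 - d)) as Hpe.
  set (X := Rpower (G / (2 * eps)) d).
  assert (HX2 : 2 <= X).
  { unfold X. replace 2 with (Rpower (Rpower 2 (1 + a)) d) at 1.
    2:{ rewrite Rpower_mult, Rmult_comm, Hda. apply Rpower_1; lra. }
    apply Rle_Rpower_l; [lra|]. split. apply Rpower_pos.
    pose proof (Rpower_pos 2 (1 + a)).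
    apply (Rmult_le_reg_r (2 * eps)); [lra|]. field_simplify; [|lra].
    apply (Rmult_lt_compat_r (2 * Rpower 2 (1 + a))) in Heps1; [|lra].
    field_simplify in Heps1; lra. }
  destruct (floor_nat X) as [K [HK1 HK2]]; [lra|].
  assert (Hm : INR K * eps <= open_measure (nbhd (seq_range u) eps)).
  { apply (nbhd_measure_lower u e K eps (range_cover u P 1 B eps)); auto.
    - apply range_cover_wf; lra.
    - apply range_cover_covers; [lra|]. apply tail_close_unit.
    - apply power_rate_separation; auto. }
  unfold mink_ratio. apply (Rmult_le_reg_r (Rpower eps (1 - d))); auto.
  replace (open_measure (nbhd (seq_range u) eps) / Rpower eps (1 - d) * Rpower eps (1 - d))
    with (open_measure (nbhd (seq_range u) eps)) by (field; lra).
  apply Rle_trans with (INR K * eps); auto.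
  apply Rle_trans with ((X / 2) * eps); [|apply Rmult_le_compat_r; lra].
  assert (Xeq : X = Rpower (G / 2) d * Rpower eps (- d)).
  { unfold X. replace (G / (2 * eps)) with ((G / 2) * / eps) by (field; lra).
    rewrite <- Rpower_mult_distr; [|lra|apply Rinv_0_lt_compat; lra].
    rewrite Rpower_inv_base by lra. reflexivity. }
  rewrite Xeq. replace (1 - d) with (1 + - d) by ring. rewrite <- Rpower_mul_base by lra.
  right. field.
Qed.

(** Upper bound: beyond [N ~ eps^(-d)] the tail lies within [eps^(1-d)] of [P]. *)
Lemma power_rate_ratio_upper eps : 0 < eps < 1 ->
  mink_ratio (seq_range u) d eps <= 4 + INR (length P) * (2 * B + 2).
Proof.
  intros Heps. destruct power_rate_exponent as [Hd Hda].
  pose proof (Rpower_pos eps (1 - d)) as Hpe.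
  set (L := INR (length P)). assert (HL : 0 <= L) by apply pos_INR.
  set (T := Rpower eps (- d)).
  assert (HT1 : 1 <= T) by (apply Rpower_ge1; lra).
  destruct (ceil_nat T) as [N [[HN1 HN2] HN]]; [lra|].
  assert (HeT : eps * T = Rpower eps (1 - d)).
  { unfold T. rewrite Rpower_mul_base by lra. f_equal; ring. }
  assert (Hee : eps <= Rpower eps (1 - d)).
  { rewrite <- (Rpower_1 eps) at 1 by lra. apply Rpower_exp_antimono; lra. }
  assert (Hm : open_measure (nbhd (seq_range u) eps) <=
               2 * eps * INR N + L * (2 * (B * Rpower eps (1 - d)) + 2 * eps)).
  { apply nbhd_measure_upper; [apply Rmult_le_pos; lra|lra|].
    intros n Hn. destruct (tail_close n ltac:(lia)) as [p [Hp Hnp]]. exists p. split; auto.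
    eapply Rle_trans; [apply Hnp|]. apply Rmult_le_compat_l; [lra|].
    apply Rle_trans with (Rpower T (- a)).
    - apply Rpower_neg_antimono; [|lra]. split; [lra|].
      apply Rle_trans with (INR N); auto. apply le_INR; auto.
    - unfold T. rewrite Rpower_mult. right. f_equal.
      apply (Rmult_eq_reg_r (1 + a)); [|lra].
      replace (- d * - a * (1 + a)) with (a * (d * (1 + a))) by ring.
      rewrite Hda. unfold d. field. lra. }
  unfold mink_ratio. apply (Rmult_le_reg_r (Rpower eps (1 - d))); auto.
  replace (open_measure (nbhd (seq_range u) eps) / Rpower eps (1 - d) * Rpower eps (1 - d))
    with (open_measure (nbhd (seq_range u) eps)) by (field; lra).
  eapply Rle_trans; [apply Hm|].
  assert (2 * eps * INR N <= 4 * Rpower eps (1 - d)).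
  { rewrite <- HeT. assert (INR N <= 2 * T) by lra. nra. }
  assert (L * (2 * (B * Rpower eps (1 - d)) + 2 * eps) <= L * (2 * B + 2) * Rpower eps (1 - d)).
  { rewrite Rmult_assoc. apply Rmult_le_compat_l; auto. nra. }
  lra.
Qed.

Lemma box_dim_power_rate :
  box_dim (seq_range u) (1 / (1 + a)) /\ mink_nondegenerate (seq_range u).
Proof.
  destruct power_rate_exponent as [Hd _].
  apply (box_dim_of_ratio_bounds _ d ((1 / 2) * Rpower (G / 2) d)
    (4 + INR (length P) * (2 * B + 2)) (Rmin 1 (G / (2 * Rpower 2 (1 + a))))); [lra| | |].
  - pose proof (Rpower_pos (G / 2) d); lra.
  - apply Rmin_pos; [lra|]. pose proof (Rpower_pos 2 (1 + a)). apply Rdiv_lt_0_compat; lra.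
  - intros eps Heps. split; [apply power_rate_ratio_lower; auto|].
    apply power_rate_ratio_upper. pose proof (Rmin_l 1 (G / (2 * Rpower 2 (1 + a)))). lra.
Qed.
End PowerRate.

(** * Iterating a map with a neutral fixed point at 0 *)

Lemma iterate_slow_decrease (h phi gap : R -> R) r0 c C :
  (forall v, 0 < v <= r0 ->
     0 < h v < v /\ gap v <= v - h v /\ phi v + c <= phi (h v) <= phi v + C) ->
  forall w : nat -> R, 0 < w 0%nat <= r0 -> (forall k, w (S k) = h (w k)) ->
  forall k, (0 < w k <= r0) /\ gap (w k) <= w k - w (S k) /\
     phi (w 0%nat) + INR k * c <= phi (w k) <= phi (w 0%nat) + INR k * C.
Proof.
  intros Hstep w Hw0 Hrec k. induction k as [|k IH].
  - simpl. rewrite Hrec. destruct (Hstep (w 0%nat) Hw0) as [H1 [H2 H3]]. repeat split; lra.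
  - destruct IH as [Hk [_ Hi]]. rewrite (Hrec (S k)), (Hrec k).
    destruct (Hstep (w k) Hk) as [H1 [H2 H3]].
    destruct (Hstep (h (w k)) ltac:(lra)) as [H5 [H6 H7]].
    rewrite S_INR. repeat split; lra.
Qed.

Lemma quadratic_step hv K M v : 0 < K -> 0 <= M -> 0 < v ->
  M * v <= K / 2 -> K * v <= 1 / 4 -> Rabs (hv - (v - K * v^2)) <= M * v^3 ->
  0 < hv < v /\ K / 2 * v^2 <= v - hv /\ / v + K / 2 <= / hv <= / v + 3 * K.
Proof.
  intros HK HM Hv HMv HKv Hb. apply Rabs_le_bounds in Hb.
  set (t := (v - hv) / v).
  assert (Hhv : hv = v * (1 - t)) by (unfold t; field; lra).
  assert (HMv3 : M * v^3 <= K / 2 * v^2)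
    by (replace (M * v^3) with ((M * v) * v^2) by ring; apply Rmult_le_compat_r; nra).
  assert (Ht : K * v / 2 <= t <= 3 * K * v / 2).
  { unfold t. split; apply (Rmult_le_reg_r v); try lra; field_simplify; nra. }
  assert (Ht1 : t <= 3/8) by nra. assert (Ht0 : 0 < t) by nra.
  pose proof (Rinv_0_lt_compat v Hv).
  rewrite Hhv. replace (/ (v * (1 - t))) with (/ v * / (1 - t)) by (field; lra).
  assert (1 + t <= / (1 - t)) by (apply (Rmult_le_reg_r (1 - t)); [lra|]; field_simplify; nra).
  assert (/ (1 - t) <= 1 + 2 * t) by (apply (Rmult_le_reg_r (1 - t)); [lra|]; field_simplify; nra).
  assert (/ v * (K * v / 2) = K / 2) by (field; lra).
  assert (/ v * (3 * K * v / 2) = 3 * K / 2) by (field; lra).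
  repeat split; nra.
Qed.

Lemma cubic_step hv K M v : 0 < K -> 0 <= M -> 0 < v ->
  M * v <= K / 2 -> K * v <= 1 / 6 -> v <= 1 / 6 -> Rabs (hv - (v - K * v^3)) <= M * v^4 ->
  0 < hv < v /\ K / 2 * v^3 <= v - hv /\ / v^2 + K <= / hv^2 <= / v^2 + 9 * K.
Proof.
  intros HK HM Hv HMv HKv Hv6 Hb. apply Rabs_le_bounds in Hb.
  set (t := (v - hv) / v).
  assert (Hhv : hv = v * (1 - t)) by (unfold t; field; lra).
  assert (HKv2 : K * v^2 <= 1 / 36) by nra.
  assert (HMv4 : M * v^4 <= K / 2 * v^3)
    by (replace (M * v^4) with ((M * v) * v^3) by ring; apply Rmult_le_compat_r; nra).
  assert (Ht : K * v^2 / 2 <= t <= 3 * K * v^2 / 2).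
  { unfold t. split; apply (Rmult_le_reg_r v); try lra; field_simplify; nra. }
  assert (0 < K * v^2) by (apply Rmult_lt_0_compat; nra).
  assert (Ht1 : t <= 1/24) by lra. assert (Ht0 : 0 < t) by lra.
  assert (Hv2 : 0 < / v^2) by (apply Rinv_0_lt_compat; nra).
  rewrite Hhv. replace (/ (v * (1 - t))^2) with (/ v^2 * / (1 - t)^2) by (field; lra).
  assert (1 + 2 * t <= / (1 - t)^2)
    by (apply (Rmult_le_reg_r ((1 - t)^2)); [nra|]; field_simplify; nra).
  assert (/ (1 - t)^2 <= 1 + 6 * t)
    by (apply (Rmult_le_reg_r ((1 - t)^2)); [nra|]; field_simplify; nra).
  assert (/ v^2 * (K * v^2) = K) by (field; lra).
  assert (/ v^2 * (3 * K * v^2 / 2) = 3 * K / 2) by (field; lra).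
  repeat split; nra.
Qed.

Lemma quadratic_escape (h : R -> R) K M r : 0 < K -> 0 <= M -> 0 < r ->
  (forall u, 0 < u <= r -> Rabs (h u - (u - K * u^2)) <= M * u^3) ->
  exists r0, 0 < r0 /\ forall w : nat -> R, 0 < w 0%nat <= r0 -> (forall k, w (S k) = h (w k)) ->
  forall k, (0 < w k <= r0) /\ K / 2 * (w k)^2 <= w k - w (S k) /\
     / w 0%nat + INR k * (K / 2) <= / w k <= / w 0%nat + INR k * (3 * K).
Proof.
  intros HK HM Hr Hh.
  set (r0 := Rmin r (Rmin (K / (2 * (M + 1))) (1 / (4 * K)))).
  assert (Hr0 : 0 < r0 /\ r0 <= r /\ M * r0 <= K / 2 /\ K * r0 <= 1/4).
  { unfold r0. assert (0 < K / (2 * (M + 1))) by (apply Rdiv_lt_0_compat; lra).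
    assert (0 < 1 / (4 * K)) by (apply Rdiv_lt_0_compat; lra).
    assert (M * (K / (2 * (M + 1))) <= K / 2).
    { apply (Rmult_le_reg_r (2 * (M + 1))); [lra|]. field_simplify; nra. }
    assert (K * (1 / (4 * K)) = 1/4) by (field; lra).
    unfold Rmin; repeat destruct Rle_dec; repeat split; try lra; nra. }
  exists r0. split; [lra|].
  apply (iterate_slow_decrease h (fun v => / v) (fun v => K / 2 * v^2) r0).
  intros v Hv. apply (quadratic_step (h v) K M v); try lra; try nra. apply Hh. lra.
Qed.

Lemma cubic_escape (h : R -> R) K M r : 0 < K -> 0 <= M -> 0 < r ->
  (forall u, 0 < u <= r -> Rabs (h u - (u - K * u^3)) <= M * u^4) ->
  exists r0, 0 < r0 /\ forall w : nat -> R, 0 < w 0%nat <= r0 -> (forall k, w (S k) = h (w k)) ->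
  forall k, (0 < w k <= r0) /\ K / 2 * (w k)^3 <= w k - w (S k) /\
     / (w 0%nat)^2 + INR k * K <= / (w k)^2 <= / (w 0%nat)^2 + INR k * (9 * K).
Proof.
  intros HK HM Hr Hh.
  set (r0 := Rmin r (Rmin (K / (2 * (M + 1))) (Rmin (1 / 6) (1 / (6 * K))))).
  assert (Hr0 : 0 < r0 /\ r0 <= r /\ M * r0 <= K / 2 /\ K * r0 <= 1/6 /\ r0 <= 1/6).
  { unfold r0. assert (0 < K / (2 * (M + 1))) by (apply Rdiv_lt_0_compat; lra).
    assert (0 < 1 / (6 * K)) by (apply Rdiv_lt_0_compat; lra).
    assert (M * (K / (2 * (M + 1))) <= K / 2).
    { apply (Rmult_le_reg_r (2 * (M + 1))); [lra|]. field_simplify; nra. }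
    assert (K * (1 / (6 * K)) = 1/6) by (field; lra).
    unfold Rmin; repeat destruct Rle_dec; repeat split; try lra; nra. }
  exists r0. split; [lra|].
  apply (iterate_slow_decrease h (fun v => / v^2) (fun v => K / 2 * v^3) r0).
  intros v Hv. apply (cubic_step (h v) K M v); try lra; try nra. apply Hh. lra.
Qed.

Lemma pow_le1 x n : 0 <= x <= 1 -> x ^ n <= 1.
Proof. intros H. induction n; simpl; [lra|]. pose proof (pow_le x n ltac:(lra)). nra. Qed.

Lemma INR_pos1 n : (1 <= n)%nat -> 0 < INR n.
Proof. intros. apply lt_0_INR. lia. Qed.

Lemma prefix_harmonic_bounds (u : nat -> R) : (forall n, (1 <= n)%nat -> 0 < u n) ->
  forall N, exists A B, 0 < A /\ A <= B /\ forall n, (1 <= n < N)%nat -> A <= u n * INR n <= B.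
Proof.
  intros Hp N. induction N as [|N [A [B [HA [HAB H]]]]].
  - exists 1, 1. repeat split; try lra; intros; lia.
  - destruct (Nat.eq_dec N 0) as [->|HN].
    + exists 1, 1. repeat split; try lra; intros; lia.
    + assert (Hv : 0 < u N * INR N) by (apply Rmult_lt_0_compat; [apply Hp; lia|apply INR_pos1; lia]).
      exists (Rmin A (u N * INR N)), (Rmax B (u N * INR N)).
      split; [apply Rmin_pos; lra|]. split.
      { unfold Rmin, Rmax; repeat destruct Rle_dec; lra. }
      intros n Hn. destruct (Nat.eq_dec n N) as [->|Hne].
      * unfold Rmin, Rmax; repeat destruct Rle_dec; lra.
      * specialize (H n ltac:(lia)). unfold Rmin, Rmax; repeat destruct Rle_dec; lra.
Qed.

Lemma comparability_iter (u : nat -> R) mn Mx : 0 < mn ->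
  (forall n, (1 <= n)%nat -> 0 < u n) ->
  (forall n, (1 <= n)%nat -> mn * u n <= u (S n) <= Mx * u n) ->
  forall b, (1 <= b)%nat -> forall r, mn^r * u b <= u (b + r)%nat <= Mx^r * u b.
Proof.
  intros Hmn Hp Hc b Hb r. induction r as [|r IH]; simpl.
  - rewrite Nat.add_0_r. lra.
  - rewrite Nat.add_succ_r. pose proof (Hc (b + r)%nat ltac:(lia)) as [H1 H2].
    pose proof (Hp (b + r)%nat ltac:(lia)). pose proof (Hp b Hb).
    assert (0 < mn ^ r) by (apply pow_lt; lra).
    split.
    + apply Rle_trans with (mn * u (b + r)%nat); [|lra].
      rewrite Rmult_assoc. apply Rmult_le_compat_l; lra.
    + apply Rle_trans with (Mx * u (b + r)%nat); [lra|].
      assert (0 <= Mx) by nra. rewrite Rmult_assoc. apply Rmult_le_compat_l; lra.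
Qed.

Lemma inverse_linear_lower w Z be M0 k : 0 < w -> 0 < M0 -> Z <= M0 -> 0 <= be <= M0 ->
  / w <= Z + INR k * be -> / (M0 * (INR k + 1)) <= w.
Proof.
  intros Hw HM0 HZ Hbe Hi. pose proof (pos_INR k).
  assert (INR k * be <= INR k * M0) by (apply Rmult_le_compat_l; lra).
  rewrite <- (Rinv_inv w). apply Rinv_le_contravar; [apply Rinv_0_lt_compat; lra|nra].
Qed.

Section BlockRate.
Variables (u : nat -> R) (n0 q : nat) (Z al be mn Mx : R).
Hypotheses (Hn0 : (1 <= n0)%nat) (Hq : (1 <= q)%nat) (HZ : 0 < Z) (Hal : 0 < al) (Hbe : 0 < be)
  (Hmn : 0 < mn <= 1) (HMx : 1 <= Mx).
Hypothesis u_pos : forall n, (1 <= n)%nat -> 0 < u n.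
Hypothesis u_comparable : forall n, (1 <= n)%nat -> mn * u n <= u (S n) <= Mx * u n.
Hypothesis u_block : forall k, Z + INR k * al <= / u (n0 + q * k)%nat <= Z + INR k * be.

Lemma block_start_bounds k :
  1 <= u (n0 + q * k)%nat * (Rmax Z be * (INR k + 1)) /\
  u (n0 + q * k)%nat * (Rmin Z al * (INR k + 1)) <= 1.
Proof.
  set (m0 := Rmin Z al). set (M0 := Rmax Z be). set (b := u (n0 + q * k)%nat).
  assert (Hm0 : 0 < m0 <= Z /\ m0 <= al) by (unfold m0, Rmin; destruct Rle_dec; lra).
  assert (HM0 : Z <= M0 /\ be <= M0) by (unfold M0, Rmax; destruct Rle_dec; lra).
  pose proof (u_block k) as [Hs1 Hs2]. fold b in Hs1, Hs2.
  pose proof (u_pos (n0 + q * k)%nat ltac:(lia)) as Hb. fold b in Hb.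
  pose proof (pos_INR k).
  split.
  - pose proof (inverse_linear_lower b Z be M0 k Hb ltac:(lra) ltac:(lra) ltac:(lra) Hs2) as Hi.
    apply (Rmult_le_compat_r (M0 * (INR k + 1))) in Hi; [|nra].
    rewrite Rinv_l in Hi by nra. lra.
  - assert (INR k * m0 <= INR k * al) by (apply Rmult_le_compat_l; lra).
    assert (Hbinv : b * / b = 1) by (field; lra).
    apply Rle_trans with (b * / b); [|lra]. apply Rmult_le_compat_l; lra.
Qed.

(** Every [n >= n0] lies in a block [n0 + q k + r] with [r < q], on which [u]
    is comparable to [1/(k+1)], itself comparable to [1/n]. *)
Lemma block_harmonic_bounds : forall n, (n0 <= n)%nat ->
  mn^q / Rmax Z be <= u n * INR n <= Mx^q * (INR n0 + INR q) / Rmin Z al.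
Proof.
  intros n Hn.
  set (m0 := Rmin Z al). set (M0 := Rmax Z be).
  assert (Hm0 : 0 < m0) by (unfold m0, Rmin; destruct Rle_dec; lra).
  assert (HM0 : 0 < M0) by (unfold M0, Rmax; destruct Rle_dec; lra).
  set (k := ((n - n0) / q)%nat). set (r := ((n - n0) mod q)%nat).
  assert (Hdm : (n - n0 = q * k + r)%nat) by (unfold k, r; apply Nat.div_mod; lia).
  assert (Hr : (r < q)%nat) by (unfold r; apply Nat.mod_upper_bound; lia).
  assert (Hn' : n = ((n0 + q * k) + r)%nat) by lia.
  pose proof (comparability_iter u mn Mx ltac:(lra) u_pos u_comparable
    (n0 + q * k)%nat ltac:(lia) r) as [H1 H2]. rewrite <- Hn' in H1, H2.
  destruct (block_start_bounds k) as [Hlow Hup]. fold m0 M0 in Hlow, Hup.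
  pose proof (u_pos (n0 + q * k)%nat ltac:(lia)) as Hb.
  set (b := u (n0 + q * k)%nat) in *.
  assert (Hmr : mn^q <= mn^r).
  { replace q with (r + (q - r))%nat by lia. rewrite pow_add.
    pose proof (pow_le mn r ltac:(lra)). pose proof (pow_le1 mn (q - r) ltac:(lra)).
    pose proof (pow_le mn (q - r) ltac:(lra)). nra. }
  assert (HMr : Mx^r <= Mx^q) by (apply Rle_pow; [lra|lia]).
  assert (Hmq : 0 < mn^q) by (apply pow_lt; lra).
  assert (HMq : 1 <= Mx^q) by (apply pow_R1_Rle; lra).
  assert (HINRn : INR n = INR n0 + INR q * INR k + INR r).
  { rewrite Hn'. rewrite !plus_INR, mult_INR. ring. }
  assert (HINRr : INR r + 1 <= INR q) by (rewrite <- S_INR; apply le_INR; lia).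
  assert (HINRq : 1 <= INR q) by (apply (le_INR 1); lia).
  assert (HINRn0 : 1 <= INR n0) by (apply (le_INR 1); lia).
  pose proof (pos_INR k). pose proof (pos_INR r).
  split.
  - apply (Rmult_le_reg_r M0); [lra|]. field_simplify; [|lra].
    assert (mn^q * b <= u n) by nra.
    assert (INR k + 1 <= INR n) by nra.
    assert (mn^q * b * (INR k + 1) <= u n * INR n) by (apply Rmult_le_compat; try lra; nra).
    nra.
  - apply (Rmult_le_reg_r m0); [lra|]. field_simplify; [|lra].
    assert (u n <= Mx^q * b) by nra.
    assert (INR n <= (INR n0 + INR q) * (INR k + 1)) by nra.
    assert (0 <= u n) by (pose proof (u_pos n ltac:(lia)); lra).
    assert (u n * INR n <= Mx^q * b * ((INR n0 + INR q) * (INR k + 1)))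
      by (apply Rmult_le_compat; nra).
    assert (0 <= Mx^q * (INR n0 + INR q)) by nra.
    nra.
Qed.

Lemma harmonic_of_blocks :
  exists A B, 0 < A /\ A <= B /\ forall n, (1 <= n)%nat -> A <= u n * INR n <= B.
Proof.
  destruct (prefix_harmonic_bounds u u_pos n0) as [A [B [HA [HAB Hfin]]]].
  set (lo := mn^q / Rmax Z be). set (hi := Mx^q * (INR n0 + INR q) / Rmin Z al).
  assert (Hlo : 0 < lo).
  { apply Rdiv_lt_0_compat; [apply pow_lt; lra|]. unfold Rmax; destruct Rle_dec; lra. }
  assert (Hlohi : lo <= hi) by (destruct (block_harmonic_bounds n0 (le_n _)); unfold lo, hi; lra).
  exists (Rmin A lo), (Rmax B hi).
  pose proof (Rmin_l A lo). pose proof (Rmin_r A lo).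
  pose proof (Rmax_l B hi). pose proof (Rmax_r B hi).
  split; [apply Rmin_pos; lra|]. split; [lra|].
  intros n Hn. destruct (Nat.lt_ge_cases n n0) as [Hlt|Hge].
  - specialize (Hfin n ltac:(lia)). lra.
  - pose proof (block_harmonic_bounds n Hge) as Hb. fold lo hi in Hb. lra.
Qed.
End BlockRate.

Lemma Rpower_minus_two x : 0 < x -> Rpower x (- (1 + 1)) = / (x * x).
Proof.
  intros Hx. rewrite Rpower_Ropp. replace (1 + 1) with (INR 2) by (simpl; ring).
  rewrite Rpower_pow by auto. f_equal. simpl. ring.
Qed.

Lemma Rpower_minus_one x : 0 < x -> Rpower x (Ropp 1) = / x.
Proof. intros Hx. rewrite Rpower_Ropp, Rpower_1; auto. Qed.

Lemma Rpower_minus_half x : 0 < x -> Rpower x (- (1 / 2)) = / sqrt x.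
Proof.
  intros Hx. rewrite Rpower_Ropp. replace (1 / 2) with (/ 2) by field. rewrite Rpower_sqrt; auto.
Qed.

Lemma Rpower_minus_three_halves x : 0 < x -> Rpower x (- (1 + 1 / 2)) = / (x * sqrt x).
Proof.
  intros Hx. rewrite Rpower_Ropp, Rpower_plus, Rpower_1 by auto.
  replace (1 / 2) with (/ 2) by field. rewrite Rpower_sqrt; auto.
Qed.

Lemma comparability_widen (d : nat -> R) L1 L2 :
  (forall n, (1 <= n)%nat -> 0 < d n) ->
  (forall n, (1 <= n)%nat -> L1 * d n <= d (S n) <= L2 * d n) ->
  forall n, (1 <= n)%nat -> Rmin 1 L1 * d n <= d (S n) <= Rmax 1 L2 * d n.
Proof.
  intros Hd Hc n Hn. pose proof (Hd n Hn). pose proof (Hc n Hn).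
  pose proof (Rmin_r 1 L1). pose proof (Rmax_r 1 L2).
  split; [apply Rle_trans with (L1 * d n)|apply Rle_trans with (L2 * d n)];
    try apply Rmult_le_compat_r; lra.
Qed.

Lemma square_lower_of_inverse_linear w Z be M0 k : 0 < w -> 0 < M0 -> Z <= M0 -> 0 <= be <= M0 ->
  / w <= Z + INR k * be -> / (M0 * M0) * / ((INR k + 1) * (INR k + 1)) <= w^2.
Proof.
  intros Hw HM0 HZ Hbe Hi. pose proof (pos_INR k).
  pose proof (inverse_linear_lower w Z be M0 k Hw HM0 HZ Hbe Hi) as Hw1.
  assert (0 < / (M0 * (INR k + 1))) by (apply Rinv_0_lt_compat; nra).
  replace (/ (M0 * M0) * / ((INR k + 1) * (INR k + 1)))
    with (/ (M0 * (INR k + 1)) * / (M0 * (INR k + 1))) by (field; lra).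
  simpl. nra.
Qed.

Lemma cube_lower_of_inverse_square w Z be M0 k : 0 < w -> 0 < M0 -> Z <= M0 -> 0 <= be <= M0 ->
  / w^2 <= Z + INR k * be ->
  / (M0 * sqrt M0) * / ((INR k + 1) * sqrt (INR k + 1)) <= w^3.
Proof.
  intros Hw HM0 HZ Hbe Hi. pose proof (pos_INR k).
  set (K1 := INR k + 1). assert (HK1 : 1 <= K1) by (unfold K1; lra).
  assert (Hwp : 0 < w^2) by (apply pow_lt; auto).
  pose proof (inverse_linear_lower (w^2) Z be M0 k Hwp HM0 HZ Hbe Hi) as Hw1. fold K1 in Hw1.
  assert (Hy : 0 < / (M0 * K1)) by (apply Rinv_0_lt_compat; nra).
  assert (Hs1 : sqrt (/ (M0 * K1)) <= w).
  { rewrite <- (sqrt_pow2 w) by lra. apply sqrt_le_1_alt; auto. }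
  assert (Hw3 : / (M0 * K1) * sqrt (/ (M0 * K1)) <= w^3).
  { replace (w^3) with (w^2 * w) by ring. apply Rmult_le_compat; try lra. apply sqrt_pos. }
  rewrite sqrt_inv, sqrt_mult_alt in Hw3 by lra.
  pose proof (sqrt_lt_R0 K1 ltac:(lra)). pose proof (sqrt_lt_R0 M0 HM0).
  replace (/ (M0 * sqrt M0) * / (K1 * sqrt K1)) with
    (/ (M0 * K1) * / (sqrt M0 * sqrt K1)) by (field; lra).
  exact Hw3.
Qed.

Lemma asymp_half_of_square (d : nat -> R) A B : 0 < A -> A <= B ->
  (forall n, (1 <= n)%nat -> 0 < d n) ->
  (forall n, (1 <= n)%nat -> A <= (d n)^2 * INR n <= B) ->
  asymp_equiv d (fun n => Rpower (INR n) (-1/2)).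
Proof.
  intros HA HAB Hd Hb. exists (sqrt A), (sqrt B). split; [apply sqrt_lt_R0; auto|].
  split; [apply sqrt_le_1_alt; auto|].
  intros n Hn. pose proof (INR_pos1 n Hn) as HnR. pose proof (Hd n Hn).
  replace (-1/2) with (- (1/2)) by field.
  rewrite Rpower_minus_half by auto. pose proof (sqrt_lt_R0 _ HnR).
  replace (d n / / sqrt (INR n)) with (d n * sqrt (INR n)) by (field; lra).
  replace (d n * sqrt (INR n)) with (sqrt ((d n)^2 * INR n))
    by (rewrite sqrt_mult_alt, sqrt_pow2 by (try apply pow_le; lra); reflexivity).
  specialize (Hb n Hn). split; apply sqrt_le_1_alt; lra.
Qed.

Section ParabolicConclusion.
Variables (u : nat -> R) (P : list R) (d : nat -> R) (n0 q : nat) (Z al be L1 L2 : R)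
  (w e : nat -> R) (s c : R).
Hypotheses (Hn0 : (1 <= n0)%nat) (Hq : (1 <= q)%nat) (HZ : 0 < Z) (Hal : 0 < al) (Hbe : 0 < be)
  (HL1 : 0 < L1) (Hc : 0 < c) (Hs : s * s = 1).
Hypothesis d_pos : forall n, (1 <= n)%nat -> 0 < d n.
Hypothesis d_comparable : forall n, (1 <= n)%nat -> L1 * d n <= d (S n) <= L2 * d n.
Hypothesis d_dist : forall n, (1 <= n)%nat -> exists p, In p P /\ Rabs (u n - p) <= d n.
Hypothesis w_returns : forall k, w k = d (n0 + q * k)%nat.
Hypothesis e_in_range : forall k, seq_range u (e k).

Let M0 := Rmax Z be.

Lemma conclusion_M0 : Z <= M0 /\ be <= M0 /\ 0 < M0.
Proof. unfold M0, Rmax; destruct Rle_dec; lra. Qed.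

Lemma rate_one_conclusion :
  (forall k, Z + INR k * al <= / w k <= Z + INR k * be) ->
  (forall k, c * (w k)^2 <= s * (e k - e (S k))) ->
  asymp_equiv d (fun n => / INR n) /\ box_dim (seq_range u) (1 / 2) /\
  mink_nondegenerate (seq_range u).
Proof.
  intros Hws Hgap. destruct conclusion_M0 as [HZM [HbeM HM0]].
  destruct (harmonic_of_blocks d n0 q Z al be (Rmin 1 L1) (Rmax 1 L2)) as [A [B [HA [HAB Hb]]]];
    auto; try apply comparability_widen; auto.
  { split; [apply Rmin_pos|apply Rmin_l]; lra. }
  { apply Rmax_l. }
  { intros k. rewrite <- w_returns. auto. }
  split.
  { exists A, B. split; [lra|]. split; [lra|]. intros m Hm. pose proof (INR_pos1 m Hm).
    replace (d m / / INR m) with (d m * INR m) by (field; lra). apply Hb; auto. }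
  replace (1 / 2) with (1 / (1 + 1)) by field.
  apply (box_dim_power_rate u P 1 B (c / (M0 * M0)) s e); auto; try lra.
  - apply Rdiv_lt_0_compat; nra.
  - intros n Hn. destruct (d_dist n Hn) as [p [Hp Hnp]]. exists p. split; auto.
    pose proof (INR_pos1 n Hn). rewrite Rpower_minus_one by auto. specialize (Hb n Hn).
    apply Rle_trans with (d n); auto. apply (Rmult_le_reg_r (INR n)); auto.
    field_simplify; lra.
  - intros k. rewrite Rpower_minus_two, S_INR by (apply INR_pos1; lia).
    eapply Rle_trans; [|apply Hgap].
    pose proof (Hws k) as [_ H2]. pose proof (d_pos (n0 + q * k)%nat ltac:(lia)) as Hw.
    rewrite <- w_returns in Hw.
    pose proof (square_lower_of_inverse_linear (w k) Z be M0 k Hw HM0 HZM ltac:(lra) H2).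
    unfold Rdiv. rewrite Rmult_assoc. apply Rmult_le_compat_l; lra.
Qed.

Lemma rate_half_conclusion :
  (forall k, Z + INR k * al <= / (w k)^2 <= Z + INR k * be) ->
  (forall k, c * (w k)^3 <= s * (e k - e (S k))) ->
  asymp_equiv d (fun n => Rpower (INR n) (-1/2)) /\ box_dim (seq_range u) (2 / 3) /\
  mink_nondegenerate (seq_range u).
Proof.
  intros Hws Hgap. destruct conclusion_M0 as [HZM [HbeM HM0]].
  assert (Hsq_comp : forall n, (1 <= n)%nat -> L1^2 * (d n)^2 <= (d (S n))^2 <= L2^2 * (d n)^2).
  { intros n Hn. pose proof (d_pos n Hn). pose proof (d_comparable n Hn) as [H1 H2].
    rewrite <- !Rpow_mult_distr. split; apply pow_incr; split; nra. }
  assert (Hsq_pos : forall n, (1 <= n)%nat -> 0 < (d n)^2) by (intros n Hn; apply pow_lt; auto).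
  destruct (harmonic_of_blocks (fun n => (d n)^2) n0 q Z al be (Rmin 1 (L1^2)) (Rmax 1 (L2^2)))
    as [A [B [HA [HAB Hb]]]]; auto.
  { split; [apply Rmin_pos; [lra|apply pow_lt; lra]|apply Rmin_l]. }
  { apply Rmax_l. }
  { apply (comparability_widen (fun n => (d n)^2)); auto. }
  { intros k. rewrite <- w_returns. auto. }
  split; [apply (asymp_half_of_square d A B); auto|].
  replace (2 / 3) with (1 / (1 + 1 / 2)) by field.
  pose proof (sqrt_lt_R0 M0 ltac:(lra)) as HsM.
  apply (box_dim_power_rate u P (1 / 2) (sqrt B) (c / (M0 * sqrt M0)) s e); auto; try lra.
  - apply sqrt_lt_R0; lra.
  - apply Rdiv_lt_0_compat; nra.
  - intros n Hn. destruct (d_dist n Hn) as [p [Hp Hnp]]. exists p. split; auto.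
    pose proof (INR_pos1 n Hn) as HnR. rewrite Rpower_minus_half by auto.
    pose proof (sqrt_lt_R0 _ HnR). pose proof (d_pos n Hn).
    apply Rle_trans with (d n); auto. apply (Rmult_le_reg_r (sqrt (INR n))); auto.
    replace (sqrt B * / sqrt (INR n) * sqrt (INR n)) with (sqrt B) by (field; lra).
    replace (d n * sqrt (INR n)) with (sqrt ((d n)^2 * INR n))
      by (rewrite sqrt_mult_alt, sqrt_pow2 by (try apply pow_le; lra); reflexivity).
    apply sqrt_le_1_alt. apply Hb; auto.
  - intros k. rewrite Rpower_minus_three_halves, S_INR by (apply INR_pos1; lia).
    eapply Rle_trans; [|apply Hgap].
    pose proof (Hws k) as [_ H2]. pose proof (d_pos (n0 + q * k)%nat ltac:(lia)) as Hw.
    rewrite <- w_returns in Hw.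
    pose proof (cube_lower_of_inverse_square (w k) Z be M0 k Hw HM0 HZM ltac:(lra) H2).
    unfold Rdiv. rewrite Rmult_assoc. apply Rmult_le_compat_l; lra.
Qed.
End ParabolicConclusion.

Lemma xn_S lam x1 n : (1 <= n)%nat -> xn lam x1 (S n) = F lam (xn lam x1 n).
Proof.
  intros Hn. unfold xn. replace (S n - 1)%nat with (S (n - 1)) by lia. reflexivity.
Qed.

Lemma xn_add lam x1 j n : (1 <= n)%nat -> xn lam x1 (j + n) = Nat.iter j (F lam) (xn lam x1 n).
Proof.
  intros Hn. induction j as [|j IH]; [reflexivity|].
  simpl. rewrite <- IH. apply xn_S. lia.
Qed.

(** Expansion of [F] around a point [a] with image [b]; its multiplier is
    [lam (1 - 2 a)]. *)
Lemma F_shift lam a b y : F lam a = b ->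
  F lam (a + y) = b + (lam * (1 - 2 * a) * y - lam * y^2).
Proof. intros H. rewrite <- H. unfold F. ring. Qed.

Lemma near_step lam a b y : 0 < lam -> F lam a = b ->
  Rabs y <= Rabs (lam * (1 - 2 * a)) / (2 * lam) ->
  Rabs (lam * (1 - 2 * a)) / 2 * Rabs y <= Rabs (F lam (a + y) - b)
    <= 2 * Rabs (lam * (1 - 2 * a)) * Rabs y.
Proof.
  intros Hl HF Hy. rewrite (F_shift lam a b y HF).
  replace (b + (lam * (1 - 2 * a) * y - lam * y ^ 2) - b)
    with (lam * (1 - 2 * a) * y - lam * y ^ 2) by ring.
  set (mu := lam * (1 - 2 * a)) in *.
  assert (Hy2 : Rabs (lam * y^2) = lam * Rabs y * Rabs y).
  { rewrite Rabs_mult, (Rabs_right lam) by lra. simpl. rewrite Rmult_1_r, Rabs_mult. ring. }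
  assert (Hly : lam * Rabs y <= Rabs mu / 2).
  { apply (Rmult_le_compat_l lam) in Hy; [|lra].
    replace (lam * (Rabs mu / (2 * lam))) with (Rabs mu / 2) in Hy by (field; lra). lra. }
  pose proof (Rabs_pos y). pose proof (Rabs_pos mu).
  assert (lam * Rabs y * Rabs y <= Rabs mu / 2 * Rabs y) by (apply Rmult_le_compat_r; lra).
  pose proof (Rabs_triang_inv (mu * y) (lam * y^2)) as Hlow.
  pose proof (Rabs_triang (mu * y) (- (lam * y^2))) as Hup.
  rewrite Rabs_mult, Hy2 in Hlow. rewrite Rabs_Ropp, Rabs_mult, Hy2 in Hup.
  replace (mu * y + - (lam * y ^ 2)) with (mu * y - lam * y ^ 2) in Hup by ring.
  assert (0 <= Rabs mu * Rabs y) by (apply Rmult_le_pos; lra).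
  split; lra.
Qed.

Lemma orbit_tracks_cycle (f D : R -> R) (x : nat -> R) (rho L1 L2 delta : R) (n0 q : nat) :
  0 < L1 -> 1 <= L2 -> (1 <= n0)%nat -> (1 <= q)%nat -> L2^(q - 1) * delta <= rho ->
  (forall n, (1 <= n)%nat -> x (S n) = f (x n)) ->
  (forall z, D z <= rho -> L1 * D z <= D (f z) <= L2 * D z) ->
  (forall n, (1 <= n <= n0)%nat -> 0 < D (x n) <= rho) ->
  (forall k, 0 < D (x (n0 + q * k)%nat) <= delta) ->
  forall n, (1 <= n)%nat -> 0 < D (x n) <= rho /\ L1 * D (x n) <= D (x (S n)) <= L2 * D (x n).
Proof.
  intros HL1 HL2 Hn0 Hq HdL Hrec Hstep Hinit Hret.
  assert (Hpow : forall j, (j <= q - 1)%nat -> 0 <= L2^j <= L2^(q - 1)).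
  { intros j Hj. split; [apply pow_le; lra|apply Rle_pow; [lra|lia]]. }
  assert (Hblock : forall k j, (j <= q - 1)%nat ->
    D (x (n0 + q * k + j)%nat) <= L2^j * D (x (n0 + q * k)%nat)).
  { intros k j. induction j as [|j IH]; intros Hj.
    - rewrite Nat.add_0_r. simpl. lra.
    - specialize (IH ltac:(lia)). pose proof (Hret k). pose proof (Hpow j ltac:(lia)).
      assert (Hsm : D (x (n0 + q * k + j)%nat) <= rho).
      { apply Rle_trans with (L2^j * D (x (n0 + q * k)%nat)); auto.
        apply Rle_trans with (L2^(q - 1) * delta); auto. apply Rmult_le_compat; lra. }
      replace (n0 + q * k + S j)%nat with (S (n0 + q * k + j)) by lia.
      rewrite Hrec by lia. destruct (Hstep _ Hsm) as [_ Hs]. simpl.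
      eapply Rle_trans; [apply Hs|]. rewrite Rmult_assoc. apply Rmult_le_compat_l; lra. }
  assert (Hsmall : forall n, (1 <= n)%nat -> D (x n) <= rho).
  { intros n Hn. destruct (Nat.le_gt_cases n n0) as [Hle|Hgt]; [apply Hinit; lia|].
    set (k := ((n - n0) / q)%nat). set (j := ((n - n0) mod q)%nat).
    assert (Hdm : (n - n0 = q * k + j)%nat) by (unfold k, j; apply Nat.div_mod; lia).
    assert (Hj : (j < q)%nat) by (unfold j; apply Nat.mod_upper_bound; lia).
    replace n with (n0 + q * k + j)%nat by lia.
    eapply Rle_trans; [apply Hblock; lia|]. pose proof (Hret k). pose proof (Hpow j ltac:(lia)).
    apply Rle_trans with (L2^(q - 1) * delta); auto. apply Rmult_le_compat; lra. }
  assert (Hcmp : forall n, (1 <= n)%nat -> L1 * D (x n) <= D (x (S n)) <= L2 * D (x n)).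
  { intros n Hn. rewrite Hrec by auto. apply Hstep, Hsmall; auto. }
  assert (Hpos : forall n, (1 <= n)%nat -> 0 < D (x n)).
  { intros n Hn. induction n as [|n IH]; [lia|].
    destruct (Nat.le_gt_cases (S n) n0) as [Hle|Hgt]; [apply Hinit; lia|].
    specialize (IH ltac:(lia)). pose proof (Hcmp n ltac:(lia)). nra. }
  intros n Hn. repeat split; auto; apply Hcmp; auto.
Qed.

Section CycleNeighbourhood.
Variables (lam : R) (D : R -> R) (pts : list R) (mn Mx g : R).
Hypotheses (Hlam : 0 < lam) (Hmn : 0 < mn) (Hg : 0 < g).
Hypothesis D_attained : forall x, exists a, In a pts /\ D x = Rabs (x - a).
Hypothesis D_local : forall b z, In b pts -> Rabs (z - b) <= g / 2 -> D z = Rabs (z - b).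
Hypothesis pts_cycle : forall a, In a pts ->
  exists b, In b pts /\ F lam a = b /\ mn <= Rabs (lam * (1 - 2 * a)) <= Mx.

(** The scale below which [F] is bi-Lipschitz for [D]. *)
Definition cycle_radius : R := Rmin (Rmin (mn / (2 * lam)) (g / (4 * (Rabs Mx + 1)))) (g / 2).

Lemma cycle_radius_spec : 0 < cycle_radius /\ cycle_radius <= mn / (2 * lam) /\
  2 * Mx * cycle_radius <= g / 2 /\ cycle_radius <= g / 2.
Proof.
  unfold cycle_radius. pose proof (Rabs_pos Mx). pose proof (Rle_abs Mx).
  set (r1 := Rmin (mn / (2 * lam)) (g / (4 * (Rabs Mx + 1)))).
  assert (Hr1 : 0 < r1 /\ r1 <= mn / (2 * lam) /\ r1 <= g / (4 * (Rabs Mx + 1))).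
  { unfold r1. split; [apply Rmin_pos; apply Rdiv_lt_0_compat; lra|].
    split; [apply Rmin_l|apply Rmin_r]. }
  pose proof (Rmin_l r1 (g / 2)). pose proof (Rmin_r r1 (g / 2)).
  assert (Hr : 0 < Rmin r1 (g / 2)) by (apply Rmin_pos; lra).
  repeat split; try lra.
  apply Rle_trans with (2 * (Rabs Mx + 1) * Rmin r1 (g / 2)); [nra|].
  apply Rle_trans with (2 * (Rabs Mx + 1) * (g / (4 * (Rabs Mx + 1)))); [|right; field; lra].
  apply Rmult_le_compat_l; lra.
Qed.

Lemma cycle_step_comparable : forall x, D x <= cycle_radius ->
  mn / 2 * D x <= D (F lam x) <= 2 * Mx * D x.
Proof.
  intros x Hx. destruct cycle_radius_spec as [Hr0 [Hr1 [Hr2 Hr3]]].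
  destruct (D_attained x) as [a [Ha HDx]]. rewrite HDx in *.
  destruct (pts_cycle a Ha) as [b [Hb [HF Hm]]].
  pose proof (near_step lam a b (x - a) Hlam HF) as Hns.
  replace (a + (x - a)) with x in Hns by ring.
  assert (Hxa : Rabs (x - a) <= Rabs (lam * (1 - 2 * a)) / (2 * lam)).
  { apply Rle_trans with (mn / (2 * lam)); [lra|]. unfold Rdiv.
    apply Rmult_le_compat_r; [left; apply Rinv_0_lt_compat|]; lra. }
  specialize (Hns Hxa) as [Hn1 Hn2]. pose proof (Rabs_pos (x - a)).
  assert (Rabs (lam * (1 - 2 * a)) * Rabs (x - a) <= Mx * cycle_radius)
    by (apply Rmult_le_compat; lra).
  rewrite (D_local b) by (auto; lra).
  split; [eapply Rle_trans; [|apply Hn1]|eapply Rle_trans; [apply Hn2|]];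
    apply Rmult_le_compat_r; lra.
Qed.

Lemma cycle_orbit_comparable x1 delta n0 q : 1 <= Mx -> (1 <= n0)%nat -> (1 <= q)%nat ->
  (2 * Mx)^(q - 1) * delta <= cycle_radius ->
  (forall n, (1 <= n <= n0)%nat -> 0 < D (xn lam x1 n) <= cycle_radius) ->
  (forall k, 0 < D (xn lam x1 (n0 + q * k)%nat) <= delta) ->
  forall n, (1 <= n)%nat -> 0 < D (xn lam x1 n) /\
    mn / 2 * D (xn lam x1 n) <= D (xn lam x1 (S n)) <= 2 * Mx * D (xn lam x1 n).
Proof.
  intros HMx Hn0 Hq HdL Hinit Hret n Hn.
  destruct (orbit_tracks_cycle (F lam) D (xn lam x1) cycle_radius (mn / 2) (2 * Mx) delta n0 q
    ltac:(lra) ltac:(lra) Hn0 Hq HdL (xn_S lam x1) cycle_step_comparable Hinit Hret n Hn)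
    as [[Hp _] Hc].
  split; auto.
Qed.

Lemma return_radius r0 q : 0 < r0 -> 1 <= Mx -> exists delta, 0 < delta /\ delta <= r0 /\
  delta <= cycle_radius /\ (2 * Mx)^(q - 1) * delta <= cycle_radius.
Proof.
  intros Hr0 HMx. destruct cycle_radius_spec as [Hrho _]. set (rho := cycle_radius) in *.
  assert (HL : 1 <= (2 * Mx)^(q - 1)) by (apply pow_R1_Rle; lra).
  exists (Rmin r0 (rho / (2 * Mx)^(q - 1))).
  pose proof (Rmin_l r0 (rho / (2 * Mx)^(q - 1))). pose proof (Rmin_r r0 (rho / (2 * Mx)^(q - 1))).
  assert (Hpos : 0 < Rmin r0 (rho / (2 * Mx)^(q - 1))) by (apply Rmin_pos; [lra|apply Rdiv_lt_0_compat; lra]).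
  assert (HdL : (2 * Mx)^(q - 1) * Rmin r0 (rho / (2 * Mx)^(q - 1)) <= rho).
  { apply Rle_trans with ((2 * Mx)^(q - 1) * (rho / (2 * Mx)^(q - 1))); [|right; field; lra].
    apply Rmult_le_compat_l; lra. }
  repeat split; auto. nra.
Qed.
End CycleNeighbourhood.

(** Conjugating by a sign [s = +-1] preserves an expansion
    [G(a+y) = a + y - K y^3 + O(y^4)], so both sides of [a] reduce to the
    same one-sided normal form. *)
Lemma signed_cubic_normal_form (G : R -> R) a K M s : s * s = 1 ->
  (forall y, Rabs y <= 1 -> Rabs (G (a + y) - a - (y - K * y^3)) <= M * y^4) ->
  forall u, 0 < u <= 1 -> Rabs (s * (G (a + s * u) - a) - (u - K * u^3)) <= M * u^4.
Proof.
  intros Hs HG u Hu.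
  assert (Has : Rabs s = 1).
  { assert (Rabs s * Rabs s = 1) by (rewrite <- Rabs_mult, Hs; apply Rabs_R1).
    pose proof (Rabs_pos s). nra. }
  assert (Hsu : Rabs (s * u) <= 1) by (rewrite Rabs_mult, Has, Rabs_right; lra).
  assert (E : u - K * u^3 = s * (s * u - K * (s * u)^3)).
  { replace (s * (s * u - K * (s * u)^3)) with ((s * s) * u - K * ((s * s) * (s * s)) * u^3)
      by ring. rewrite Hs. ring. }
  assert (E4 : (s * u)^4 = u^4).
  { replace ((s * u)^4) with ((s * s) * (s * s) * u^4) by ring. rewrite Hs. ring. }
  rewrite E, <- Rmult_minus_distr_l, Rabs_mult, Has, <- E4.
  specialize (HG (s * u) Hsu). lra.
Qed.

Lemma cubic_neutral_orbit (G : R -> R) a K M : 0 < K -> 0 <= M ->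
  (forall y, Rabs y <= 1 -> Rabs (G (a + y) - a - (y - K * y^3)) <= M * y^4) ->
  exists r0, 0 < r0 /\ forall y : nat -> R, 0 < Rabs (y 0%nat - a) <= r0 ->
    (forall k, y (S k) = G (y k)) ->
    exists s, s * s = 1 /\ forall k, Rabs (y k - a) = s * (y k - a) /\
      0 < s * (y k - a) <= s * (y 0%nat - a) /\
      K / 2 * (s * (y k - a))^3 <= s * (y k - a) - s * (y (S k) - a) /\
      / (s * (y 0%nat - a))^2 + INR k * K <= / (s * (y k - a))^2
        <= / (s * (y 0%nat - a))^2 + INR k * (9 * K).
Proof.
  intros HK HM HG.
  set (h := fun s u => s * (G (a + s * u) - a)).
  assert (Hh : forall s, s * s = 1 -> forall u, 0 < u <= 1 ->
    Rabs (h s u - (u - K * u^3)) <= M * u^4).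
  { intros s Hs. apply signed_cubic_normal_form; auto. }
  destruct (cubic_escape (h 1) K M 1 HK HM ltac:(lra) (Hh 1 ltac:(lra))) as [r1 [Hr1 Hn1]].
  destruct (cubic_escape (h (-1)) K M 1 HK HM ltac:(lra) (Hh (-1) ltac:(lra))) as [r2 [Hr2 Hn2]].
  exists (Rmin r1 r2). split; [apply Rmin_pos; lra|].
  intros y Hy0 Hrec.
  pose proof (Rmin_l r1 r2). pose proof (Rmin_r r1 r2).
  set (s := if Rlt_dec 0 (y 0%nat - a) then 1 else -1).
  assert (Hs : s * s = 1 /\ Rabs (y 0%nat - a) = s * (y 0%nat - a)).
  { unfold s. destruct Rlt_dec.
    - split; [ring|]. rewrite Rabs_right; lra.
    - split; [ring|]. assert (y 0%nat - a <> 0) by (intro Hc; rewrite Hc, Rabs_R0 in Hy0; lra).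
      rewrite Rabs_left; lra. }
  destruct Hs as [Hss Habs0]. exists s. split; auto.
  set (w := fun k => s * (y k - a)).
  assert (Hy : forall k, y k = a + s * w k).
  { intros k. unfold w. rewrite <- Rmult_assoc, Hss. ring. }
  assert (Hwrec : forall k, w (S k) = h s (w k)).
  { intros k. unfold h. rewrite <- Hy. unfold w. rewrite Hrec. reflexivity. }
  assert (Hw0 : 0 < w 0%nat <= Rmin r1 r2) by (unfold w; rewrite <- Habs0; lra).
  assert (Hesc : forall k, 0 < w k /\ K / 2 * (w k)^3 <= w k - w (S k) /\
     / (w 0%nat)^2 + INR k * K <= / (w k)^2 <= / (w 0%nat)^2 + INR k * (9 * K)).
  { intros k. unfold s in Hwrec. destruct (Rlt_dec 0 (y 0%nat - a)).
    - destruct (Hn1 w ltac:(lra) Hwrec k) as [[Hp _] Hrest]. split; [lra|auto].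
    - destruct (Hn2 w ltac:(lra) Hwrec k) as [[Hp _] Hrest]. split; [lra|auto]. }
  assert (Hmono : forall k, w k <= w 0%nat).
  { induction k as [|k IH]; [lra|]. destruct (Hesc k) as [Hp [Hgap _]].
    assert (0 <= K / 2 * (w k)^3) by (apply Rmult_le_pos; [lra|apply pow_le; lra]). lra. }
  intros k. destruct (Hesc k) as [Hp [Hgap Hbd]]. pose proof (Hmono k).
  fold (w k) (w (S k)) (w 0%nat). repeat split; auto; try lra.
  assert (Hsk : y k - a = s * w k) by (rewrite (Hy k); ring).
  rewrite Hsk, Rabs_mult, (Rabs_right (w k)) by lra.
  assert (s = 1 \/ s = -1) as [-> | ->] by nra; unfold w; unfold Rabs; destruct Rcase_abs; lra.
Qed.

(** * (a) The neutral fixed point 0 of [F 1] *)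

(** Here [F 1 x = x - x^2] exactly, so the orbit is its own return sequence. *)
Lemma part_a : exists delta, 0 < delta /\ forall x1, 0 < x1 < delta ->
     asymp_equiv (xn 1 x1) (fun n => / INR n) /\
     box_dim (Sset 1 x1) (1/2) /\ mink_nondegenerate (Sset 1 x1).
Proof.
  destruct (quadratic_escape (F 1) 1 0 1) as [r0 [Hr0 Hesc]]; try lra.
  { intros u Hu. unfold F. replace (1 * u * (1 - u) - (u - 1 * u ^ 2)) with 0 by ring.
    rewrite Rabs_R0. lra. }
  exists (Rmin r0 (1/4)). split; [apply Rmin_pos; lra|].
  intros x1 Hx1. pose proof (Rmin_l r0 (1/4)). pose proof (Rmin_r r0 (1/4)).
  set (w := fun k => xn 1 x1 (S k)).
  assert (Hxw : forall n, (1 <= n)%nat -> xn 1 x1 n = w (n - 1)%nat).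
  { intros n Hn. unfold w. f_equal. lia. }
  assert (Hrec : forall k, w (S k) = F 1 (w k)) by (intros k; unfold w; apply xn_S; lia).
  assert (Hw0 : w 0%nat = x1) by reflexivity.
  pose proof (Hesc w ltac:(rewrite Hw0; lra) Hrec) as Hw.
  assert (Hsmall : forall k, 0 < w k <= 1/4).
  { intros k. induction k as [|k IH]; [rewrite Hw0; lra|].
    destruct (Hw k) as [_ [Hg _]]. destruct (Hw (S k)) as [[Hp _] _].
    split; [lra|]. assert (0 <= 1/2 * (w k)^2) by nra. lra. }
  apply (rate_one_conclusion (xn 1 x1) (0 :: nil) (xn 1 x1) 1 1 (/ x1) (1/2) 3 (3/4) 1 w w 1 (1/2));
    try lra; auto.
  - apply Rinv_0_lt_compat; lra.
  - intros n Hn. rewrite Hxw by auto. apply Hsmall.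
  - intros n Hn. rewrite xn_S, Hxw by auto. pose proof (Hsmall (n - 1)%nat).
    unfold F. split; nra.
  - intros n Hn. exists 0. split; [left; auto|]. rewrite Hxw by auto.
    pose proof (Hsmall (n - 1)%nat). rewrite Rminus_0_r, Rabs_right by lra. lra.
  - intros k. rewrite Hxw by lia. f_equal. lia.
  - intros k. exists (S k). split; [lia|reflexivity].
  - intros k. destruct (Hw k) as [_ [_ [H1 H2]]]. rewrite Hw0 in H1, H2. lra.
  - intros k. destruct (Hw k) as [_ [Hg _]]. lra.
Qed.

Lemma flip_cycle_rate lam (D : R -> R) (pts : list R) mn Mx g a (q : nat) (G : R -> R) K M :
  0 < lam -> 0 < mn -> 0 < g -> 1 <= Mx -> (1 <= q)%nat -> In a pts ->
  (forall x, exists p, In p pts /\ D x = Rabs (x - p)) ->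
  (forall b z, In b pts -> Rabs (z - b) <= g / 2 -> D z = Rabs (z - b)) ->
  (forall p, In p pts -> exists b, In b pts /\ F lam p = b /\ mn <= Rabs (lam * (1 - 2 * p)) <= Mx) ->
  (forall x, G x = Nat.iter q (F lam) x) ->
  0 < K -> 0 <= M ->
  (forall y, Rabs y <= 1 -> Rabs (G (a + y) - a - (y - K * y^3)) <= M * y^4) ->
  exists delta, 0 < delta /\ forall x1, 0 < Rabs (x1 - a) < delta ->
    asymp_equiv (fun n => D (xn lam x1 n)) (fun n => Rpower (INR n) (-1/2)) /\
    box_dim (Sset lam x1) (2/3) /\ mink_nondegenerate (Sset lam x1).
Proof.
  intros Hlam Hmn Hg HMx Hq Ha Hatt Hloc Hcyc HG HK HM Htaylor.
  destruct (cycle_radius_spec lam mn Mx g Hlam Hmn Hg) as [_ [_ [_ Hrg]]].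
  destruct (cubic_neutral_orbit G a K M HK HM Htaylor) as [r0 [Hr0 Hneutral]].
  destruct (return_radius lam mn Mx g Hlam Hmn Hg r0 q Hr0 HMx) as [delta [Hd [Hdr0 [Hdr HdL]]]].
  exists delta. split; auto. intros x1 Hx1.
  set (y := fun k => xn lam x1 (1 + q * k)).
  assert (Hrec : forall k, y (S k) = G (y k)).
  { intros k. unfold y. rewrite HG, <- xn_add by lia. f_equal. lia. }
  assert (Hy0 : y 0%nat = x1) by (unfold y; rewrite Nat.mul_0_r; reflexivity).
  destruct (Hneutral y ltac:(rewrite Hy0; lra) Hrec) as [s [Hs Hw]].
  assert (Hret : forall k, D (y k) = s * (y k - a) /\ 0 < s * (y k - a) <= delta).
  { intros k. destruct (Hw k) as [Habs [[Hp Hle] _]].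
    destruct (Hw 0%nat) as [Habs0 _]. rewrite Hy0 in Habs0, Hle.
    rewrite Hloc with (b := a), Habs by (auto; lra). lra. }
  assert (Hinit : forall n, (1 <= n <= 1)%nat -> 0 < D (xn lam x1 n) <= cycle_radius lam mn Mx g).
  { intros n Hn. replace n with 1%nat by lia. change (xn lam x1 1) with x1.
    destruct (Hret 0%nat) as [HD Hb]. rewrite Hy0 in HD, Hb. lra. }
  assert (Hreturns : forall k, 0 < D (xn lam x1 (1 + q * k)%nat) <= delta).
  { intros k. change (0 < D (y k) <= delta). destruct (Hret k) as [HD Hb]. rewrite HD. exact Hb. }
  pose proof (cycle_orbit_comparable lam D pts mn Mx g Hlam Hmn Hg Hatt Hloc Hcyc
    x1 delta 1 q HMx (le_n 1) Hq HdL Hinit Hreturns) as Hnear.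
  destruct (Hw 0%nat) as [_ [Hw0 _]].
  apply (rate_half_conclusion (xn lam x1) pts (fun n => D (xn lam x1 n)) 1 q
    (/ (s * (y 0%nat - a))^2) K (9 * K) (mn / 2) (2 * Mx) (fun k => s * (y k - a)) y s (K / 2));
    auto; try lra.
  - apply Rinv_0_lt_compat, pow_lt. lra.
  - intros n Hn. apply Hnear; auto.
  - intros n Hn. apply Hnear; auto.
  - intros n Hn. destruct (Hatt (xn lam x1 n)) as [p [Hp HD]]. exists p. split; auto. lra.
  - intros k. destruct (Hret k) as [HD _]. rewrite <- HD. reflexivity.
  - intros k. exists (1 + q * k)%nat. split; [lia|reflexivity].
  - intros k. destruct (Hw k) as [_ [_ [_ Hbd]]]. exact Hbd.
  - intros k. destruct (Hw k) as [_ [_ [Hgap _]]].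
    replace (s * (y k - y (S k))) with (s * (y k - a) - s * (y (S k) - a)) by ring. exact Hgap.
Qed.

(** * (b) The fixed point 2/3 of [F 3], with multiplier [-1] *)

(** [F 3 (F 3 (2/3 + y)) = 2/3 + y - 18 y^3 - 27 y^4]. *)
Lemma part_b : exists delta, 0 < delta /\ forall x1, 0 < Rabs (x1 - 2/3) < delta ->
     asymp_equiv (fun n => Rabs (xn 3 x1 n - 2/3)) (fun n => Rpower (INR n) (-1/2)) /\
     box_dim (Sset 3 x1) (2/3) /\ mink_nondegenerate (Sset 3 x1).
Proof.
  apply (flip_cycle_rate 3 (fun z => Rabs (z - 2/3)) (2/3 :: nil) 1 1 1 (2/3) 2
    (fun x => F 3 (F 3 x)) 18 27); try lra; try lia.
  - left; reflexivity.
  - intros x. exists (2/3). split; [left|]; reflexivity.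
  - intros b z [<-|[]] _. reflexivity.
  - intros p [<-|[]]. exists (2/3). split; [left; reflexivity|]. split; [unfold F; field|].
    replace (3 * (1 - 2 * (2/3))) with (-1) by field. rewrite Rabs_left; lra.
  - reflexivity.
  - intros y Hy. cbv beta.
    replace (F 3 (F 3 (2/3 + y)) - 2/3 - (y - 18 * y^3)) with (- (27 * y^4)) by (unfold F; field).
    rewrite Rabs_Ropp, Rabs_right; [lra|]. apply Rle_ge, Rmult_le_pos; [lra|].
    replace (y^4) with ((y^2)^2) by ring. apply pow2_ge_0.
Qed.

(** * (c) Geometric convergence gives box dimension 0 *)

(** [ln y <= y^s / s], from [exp t >= 1 + t]. *)
Lemma ln_le_power y s : 0 < y -> 0 < s -> ln y <= Rpower y s / s.
Proof.
  intros Hy Hs. pose proof (exp_ineq1_le (s * ln y)).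
  unfold Rpower. apply (Rmult_le_reg_l s); auto. field_simplify; lra.
Qed.

Lemma log_ratio_bound C eps s : 0 < C -> 0 < eps -> 0 < s ->
  ln (C / eps) <= Rabs (ln C) + 2 / s * Rpower eps (- (s / 2)).
Proof.
  intros HC Heps Hs. unfold Rdiv at 1. rewrite ln_mult by (try lra; apply Rinv_0_lt_compat; lra).
  pose proof (Rle_abs (ln C)) as Habs.
  pose proof (ln_le_power (/ eps) (s / 2) ltac:(apply Rinv_0_lt_compat; lra) ltac:(lra)) as Hpow.
  rewrite Rpower_inv_base in Hpow by lra. replace (Rpower eps (- (s / 2)) / (s / 2))
    with (2 / s * Rpower eps (- (s / 2))) in Hpow by (field; lra). lra.
Qed.

Lemma power_log_vanishes s a b C : 0 < s -> 0 <= a -> 0 <= b -> 0 < C ->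
  forall eta, 0 < eta -> exists e1, 0 < e1 /\ forall eps, 0 < eps < e1 ->
    Rpower eps s * (a + b * ln (C / eps)) < eta.
Proof.
  intros Hs Ha Hb HC eta Heta.
  set (c1 := a + b * Rabs (ln C) + 1). set (c2 := 2 * b / s + 1).
  assert (Hc1 : 0 < c1) by (unfold c1; pose proof (Rabs_pos (ln C)); nra).
  assert (Hc2 : 0 < c2) by (unfold c2; assert (0 <= 2 * b / s) by
    (apply Rmult_le_pos; [lra|left; apply Rinv_0_lt_compat; lra]); lra).
  set (t1 := exp (ln (eta / (2 * c1)) / s)). set (t2 := exp (ln (eta / (2 * c2)) / (s / 2))).
  exists (Rmin 1 (Rmin t1 t2)).
  split; [apply Rmin_pos; [lra|apply Rmin_pos; apply exp_pos]|]. intros eps [Heps Heps1].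
  assert (Hbd : eps < 1 /\ eps < t1 /\ eps < t2).
  { pose proof (Rmin_l 1 (Rmin t1 t2)). pose proof (Rmin_r 1 (Rmin t1 t2)).
    pose proof (Rmin_l t1 t2). pose proof (Rmin_r t1 t2). lra. }
  destruct Hbd as [He1 [Het1 Het2]].
  assert (Hp1 : Rpower eps s < eta / (2 * c1))
    by (apply Rpower_small; [lra|apply Rdiv_lt_0_compat; lra|lra|exact Het1]).
  assert (Hp2 : Rpower eps (s / 2) < eta / (2 * c2))
    by (apply Rpower_small; [lra|apply Rdiv_lt_0_compat; lra|lra|exact Het2]).
  pose proof (log_ratio_bound C eps s HC Heps Hs) as Hln.
  assert (Hsplit : Rpower eps s * Rpower eps (- (s / 2)) = Rpower eps (s / 2)).
  { rewrite <- Rpower_plus. f_equal. field. }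
  pose proof (Rpower_pos eps s). pose proof (Rpower_pos eps (s / 2)).
  pose proof (Rabs_pos (ln C)).
  apply Rle_lt_trans with (c1 * Rpower eps s + c2 * Rpower eps (s / 2)).
  - rewrite <- Hsplit. unfold c1, c2.
    assert (b * ln (C / eps) <= b * Rabs (ln C) + 2 * b / s * Rpower eps (- (s / 2))).
    { apply Rle_trans with (b * (Rabs (ln C) + 2 / s * Rpower eps (- (s / 2)))).
      - apply Rmult_le_compat_l; lra.
      - right. field. lra. }
    pose proof (Rpower_pos eps (- (s / 2))). nra.
  - apply (Rmult_lt_compat_l c1) in Hp1; auto. apply (Rmult_lt_compat_l c2) in Hp2; auto.
    replace (c1 * (eta / (2 * c1))) with (eta / 2) in Hp1 by (field; lra).
    replace (c2 * (eta / (2 * c2))) with (eta / 2) in Hp2 by (field; lra). lra.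
Qed.

Section GeometricTail.
Variables (u : nat -> R) (l C rho : R) (N0 : nat).
Hypotheses (HC : 0 < C) (Hrho : 0 < rho < 1).
Hypothesis geometric : forall k, Rabs (u (N0 + k)%nat - l) <= C * rho ^ k.

Lemma geometric_log_rate : 0 < - ln rho.
Proof. assert (ln rho < 0) by (rewrite <- ln_1; apply ln_increasing; lra). lra. Qed.

(** The tail beyond [N0 + ln(C/eps)/|ln rho|] is within [eps] of [l], so the
    neighbourhood is covered by about [ln(1/eps)] intervals of length [2 eps]. *)
Lemma geometric_tail_measure eps : 0 < eps < C ->
  open_measure (nbhd (seq_range u) eps) <= 2 * eps * (INR N0 + 3 + ln (C / eps) / (- ln rho)).
Proof.
  intros Heps. pose proof geometric_log_rate as HL. set (L := - ln rho) in *.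
  set (T := ln (C / eps) / L).
  assert (HlnCe : 0 < ln (C / eps)).
  { rewrite <- ln_1. apply ln_increasing; [lra|]. apply (Rmult_lt_reg_r eps); [lra|].
    field_simplify; lra. }
  assert (HT : 0 <= T) by (unfold T; apply Rmult_le_pos; [lra|left; apply Rinv_0_lt_compat; lra]).
  destruct (ceil_nat T HT) as [k [[Hk1 Hk2] _]].
  assert (Hrk : C * rho ^ k <= eps).
  { rewrite <- Rpower_pow by lra. unfold Rpower.
    assert (INR k * ln rho <= - ln (C / eps)).
    { replace (ln rho) with (- L) by (unfold L; ring).
      assert (T * L = ln (C / eps)) by (unfold T; field; lra). nra. }
    assert (Hexp : exp (INR k * ln rho) <= exp (- ln (C / eps))).
    { destruct (Req_dec (INR k * ln rho) (- ln (C / eps))) as [E|E]; [rewrite E; lra|].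
      left. apply exp_increasing. lra. }
    rewrite exp_Ropp, exp_ln in Hexp by (apply Rdiv_lt_0_compat; lra).
    replace (/ (C / eps)) with (eps / C) in Hexp by (field; lra).
    apply (Rmult_le_compat_l C) in Hexp; [|lra].
    replace (C * (eps / C)) with eps in Hexp by (field; lra). lra. }
  assert (Hm := nbhd_measure_upper u (l :: nil) (N0 + k) eps eps ltac:(lra) ltac:(lra)).
  apply Rle_trans with (2 * eps * INR (N0 + k) + 1 * (2 * eps + 2 * eps)).
  - apply Hm. intros n Hn. exists l. split; [left; auto|].
    replace n with (N0 + (k + (n - N0 - k)))%nat by lia.
    eapply Rle_trans; [apply geometric|]. rewrite pow_add.
    assert (rho ^ (n - N0 - k) <= 1) by (apply pow_le1; lra).
    assert (0 <= rho ^ k) by (apply pow_le; lra).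
    assert (C * rho ^ k * rho ^ (n - N0 - k) <= C * rho ^ k * 1) by (apply Rmult_le_compat_l; nra).
    rewrite <- Rmult_assoc. lra.
  - rewrite plus_INR. fold T. nra.
Qed.

Lemma geometric_box_dim_zero : forall s, 0 < s -> upper_mink_zero (seq_range u) s.
Proof.
  intros s Hs eta Heta. pose proof geometric_log_rate as HL.
  assert (Ha : 0 <= 2 * (INR N0 + 3)) by (pose proof (pos_INR N0); lra).
  assert (Hb : 0 <= 2 / - ln rho) by (apply Rmult_le_pos; [lra|left; apply Rinv_0_lt_compat; lra]).
  destruct (power_log_vanishes s _ _ C Hs Ha Hb HC eta Heta) as [e1 [He1 Hsmall]].
  exists (Rmin e1 C). split; [apply Rmin_pos; lra|]. intros eps [Heps Heps1].
  pose proof (Rmin_l e1 C). pose proof (Rmin_r e1 C).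
  specialize (Hsmall eps ltac:(lra)).
  pose proof (geometric_tail_measure eps ltac:(lra)) as Hm.
  unfold mink_ratio.
  replace (Rpower eps (1 - s)) with (eps * / Rpower eps s)
    by (rewrite <- Rpower_Ropp, Rpower_mul_base by lra; f_equal; ring).
  pose proof (Rpower_pos eps s).
  apply Rle_lt_trans with (Rpower eps s * (2 * (INR N0 + 3) + 2 / - ln rho * ln (C / eps)));
    [|exact Hsmall].
  apply (Rmult_le_reg_r (eps * / Rpower eps s)).
  { apply Rmult_lt_0_compat; [lra|apply Rinv_0_lt_compat; lra]. }
  replace (open_measure (nbhd (seq_range u) eps) / (eps * / Rpower eps s) * (eps * / Rpower eps s))
    with (open_measure (nbhd (seq_range u) eps)) by (field; lra).
  eapply Rle_trans; [apply Hm|]. right. field. lra.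
Qed.
End GeometricTail.

Definition geometric_tail (u : nat -> R) (l : R) : Prop :=
  exists N0 C rho, (1 <= N0)%nat /\ 0 < C /\ 0 < rho < 1 /\
    forall k, Rabs (u (N0 + k)%nat - l) <= C * rho ^ k.

Lemma geometric_tail_box_dim_zero u l : geometric_tail u l -> box_dim (seq_range u) 0.
Proof.
  intros [N0 [C [rho [_ [HC [Hrho Hgeo]]]]]].
  apply box_dim_zero. apply (geometric_box_dim_zero u l C rho N0); auto.
Qed.

Lemma pow_bernoulli r k : 1 <= r -> 1 + INR k * (r - 1) <= r ^ k.
Proof.
  intros Hr. induction k as [|k IH]; [simpl; lra|]. rewrite S_INR. simpl.
  assert (1 <= r^k) by (apply pow_R1_Rle; lra). nra.
Qed.

Section FixedPointLimit.
Variables (u : nat -> R) (f : R -> R) (l : R).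
Hypothesis u_orbit : forall n, (1 <= n)%nat -> u (S n) = f (u n).
Hypothesis u_unit : forall n, 0 <= u n <= 1.
Hypothesis u_limit : Un_cv u l.

Lemma attracting_limit_geometric r rho : 0 < r -> 0 < rho < 1 ->
  (forall x, 0 <= x <= 1 -> Rabs (x - l) <= r -> Rabs (f x - l) <= rho * Rabs (x - l)) ->
  geometric_tail u l.
Proof.
  intros Hr Hrho Hf.
  destruct (u_limit r Hr) as [N HN]. exists (max N 1), r, rho. repeat split; try lia; try lra.
  intros k. induction k as [|k IH].
  - rewrite Nat.add_0_r. simpl. specialize (HN (max N 1) ltac:(lia)). unfold R_dist in HN. lra.
  - replace (max N 1 + S k)%nat with (S (max N 1 + k)) by lia. rewrite u_orbit by lia.
    specialize (HN (max N 1 + k)%nat ltac:(lia)). unfold R_dist in HN.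
    eapply Rle_trans; [apply Hf; auto; lra|]. simpl. nra.
Qed.

(** A repelling fixed point can only be the limit of an orbit that reaches it:
    otherwise the distance to [l] would grow geometrically near [l]. *)
Lemma repelling_limit_geometric r rho : 0 < r -> 1 < rho ->
  (forall x, 0 <= x <= 1 -> Rabs (x - l) <= r -> rho * Rabs (x - l) <= Rabs (f x - l)) ->
  geometric_tail u l.
Proof.
  intros Hr Hrho Hf.
  destruct (u_limit r Hr) as [N HN]. exists (max N 1), 1, (1/2). repeat split; try lia; try lra.
  intros k. set (n := (max N 1 + k)%nat).
  assert (Hclose : forall j, Rabs (u (n + j)%nat - l) < r).
  { intros j. specialize (HN (n + j)%nat ltac:(unfold n; lia)). exact HN. }
  assert (Hgrow : forall j, rho ^ j * Rabs (u n - l) <= Rabs (u (n + j)%nat - l)).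
  { intros j. induction j as [|j IH].
    - rewrite Nat.add_0_r. simpl. lra.
    - replace (n + S j)%nat with (S (n + j)) by lia. rewrite u_orbit by (unfold n; lia).
      eapply Rle_trans; [|apply Hf; auto; specialize (Hclose j); lra].
      simpl. rewrite Rmult_assoc. apply Rmult_le_compat_l; lra. }
  assert (Hz : Rabs (u n - l) = 0).
  { destruct (Rle_or_lt (Rabs (u n - l)) 0) as [H|H]; [pose proof (Rabs_pos (u n - l)); lra|].
    exfalso. set (t := Rabs (u n - l)) in *.
    destruct (floor_nat (r / (t * (rho - 1)))) as [j [_ Hj]].
    { apply Rlt_le, Rdiv_lt_0_compat; nra. }
    pose proof (Hgrow (S j)). pose proof (pow_bernoulli rho (S j) ltac:(lra)).
    specialize (Hclose (S j)). rewrite S_INR in *.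
    assert (r < (INR j + 1) * (t * (rho - 1))).
    { apply (Rmult_lt_reg_r (/ (t * (rho - 1)))); [apply Rinv_0_lt_compat; nra|].
      rewrite Rmult_assoc, Rinv_r by nra. lra. }
    nra. }
  rewrite Hz. pose proof (pow_lt (1/2) k ltac:(lra)). lra.
Qed.
End FixedPointLimit.

Lemma F_unit_interval lam x : 0 <= lam <= 4 -> 0 <= x <= 1 -> 0 <= F lam x <= 1.
Proof.
  intros Hl Hx. unfold F.
  assert (0 <= x * (1 - x) <= 1/4).
  { split; [apply Rmult_le_pos; lra|]. pose proof (pow2_ge_0 (x - 1/2)). nra. }
  replace (lam * x * (1 - x)) with (lam * (x * (1 - x))) by ring. split; nra.
Qed.

Lemma orbit_unit_interval lam x1 : 0 <= lam <= 4 -> 0 <= x1 <= 1 ->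
  forall n, 0 <= xn lam x1 n <= 1.
Proof.
  intros Hl Hx n. unfold xn. generalize (n - 1)%nat. intros m. induction m; simpl; auto.
  apply F_unit_interval; auto.
Qed.

Lemma orbit_limit_fixed lam x1 l : Un_cv (xn lam x1) l -> F lam l = l.
Proof.
  intros Hc. apply (UL_sequence (fun n => F lam (xn lam x1 n))).
  - apply continuity_seq; auto. unfold F. reg.
  - intros eps Heps. destruct (Hc eps Heps) as [N HN]. exists (max N 1). intros n Hn.
    rewrite <- xn_S by lia. apply HN. lia.
Qed.

Lemma zero_attracting lam : 0 < lam < 1 -> forall x, 0 <= x <= 1 -> Rabs (x - 0) <= 1 ->
  Rabs (F lam x - 0) <= lam * Rabs (x - 0).
Proof.
  intros Hl x Hx _. unfold F. rewrite !Rminus_0_r, (Rabs_right x) by lra.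
  rewrite Rabs_right by (apply Rle_ge, Rmult_le_pos; [apply Rmult_le_pos|]; lra). nra.
Qed.

Lemma zero_repelling lam : 1 < lam -> forall x, 0 <= x <= 1 ->
  Rabs (x - 0) <= (lam - 1) / (2 * lam) -> (lam + 1) / 2 * Rabs (x - 0) <= Rabs (F lam x - 0).
Proof.
  intros Hl x Hx Hxr. unfold F. rewrite !Rminus_0_r in *.
  rewrite (Rabs_right x) in * by lra.
  rewrite Rabs_right by (apply Rle_ge, Rmult_le_pos; [apply Rmult_le_pos|]; lra).
  apply (Rmult_le_compat_l lam) in Hxr; [|lra].
  replace (lam * ((lam - 1) / (2 * lam))) with ((lam - 1) / 2) in Hxr by (field; lra). nra.
Qed.

Lemma interior_fixed_expansion lam x : 0 < lam ->
  F lam x - (1 - 1 / lam) = (x - (1 - 1 / lam)) * ((2 - lam) - lam * (x - (1 - 1 / lam))).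
Proof. intros Hl. unfold F. field. lra. Qed.

Lemma interior_attracting lam : 1 < lam < 3 -> forall x,
  Rabs (x - (1 - 1 / lam)) <= (1 - Rabs (2 - lam)) / (2 * lam) ->
  Rabs (F lam x - (1 - 1 / lam)) <= (1 + Rabs (2 - lam)) / 2 * Rabs (x - (1 - 1 / lam)).
Proof.
  intros Hl x Hxr. rewrite interior_fixed_expansion, Rabs_mult by lra.
  set (y := x - (1 - 1 / lam)) in *.
  assert (Rabs (2 - lam - lam * y) <= (1 + Rabs (2 - lam)) / 2).
  { eapply Rle_trans; [apply Rabs_triang|]. rewrite Rabs_Ropp, Rabs_mult, (Rabs_right lam) by lra.
    apply (Rmult_le_compat_l lam) in Hxr; [|lra].
    replace (lam * ((1 - Rabs (2 - lam)) / (2 * lam))) with ((1 - Rabs (2 - lam)) / 2) in Hxr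
      by (field; lra). lra. }
  pose proof (Rabs_pos y). rewrite (Rmult_comm ((1 + Rabs (2 - lam)) / 2)).
  apply Rmult_le_compat_l; lra.
Qed.

Lemma interior_repelling lam : 3 < lam -> forall x,
  Rabs (x - (1 - 1 / lam)) <= (lam - 3) / (2 * lam) ->
  (lam - 1) / 2 * Rabs (x - (1 - 1 / lam)) <= Rabs (F lam x - (1 - 1 / lam)).
Proof.
  intros Hl x Hxr. rewrite interior_fixed_expansion, Rabs_mult by lra.
  set (y := x - (1 - 1 / lam)) in *.
  assert ((lam - 1) / 2 <= Rabs (2 - lam - lam * y)).
  { pose proof (Rabs_triang_inv (2 - lam) (lam * y)) as H.
    rewrite Rabs_mult, (Rabs_right lam), (Rabs_left (2 - lam)) in H by lra.
    apply (Rmult_le_compat_l lam) in Hxr; [|lra].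
    replace (lam * ((lam - 3) / (2 * lam))) with ((lam - 3) / 2) in Hxr by (field; lra). lra. }
  pose proof (Rabs_pos y). rewrite (Rmult_comm ((lam - 1) / 2)). apply Rmult_le_compat_l; lra.
Qed.

Lemma limit_unit_interval (u : nat -> R) l : Un_cv u l -> (forall n, 0 <= u n <= 1) -> 0 <= l <= 1.
Proof.
  intros Hc Hu. split.
  - destruct (Rle_or_lt 0 l); auto. destruct (Hc (- l) ltac:(lra)) as [N HN].
    specialize (HN N (le_n _)). unfold R_dist in HN. apply Rabs_def2 in HN. specialize (Hu N). lra.
  - destruct (Rle_or_lt l 1); auto. destruct (Hc (l - 1) ltac:(lra)) as [N HN].
    specialize (HN N (le_n _)). unfold R_dist in HN. apply Rabs_def2 in HN. specialize (Hu N). lra.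
Qed.

(** (c) Away from [lam = 1, 3] every fixed point is hyperbolic, so a
    convergent orbit converges geometrically and its range has dimension 0. *)
Lemma part_c : forall lam x1, 0 < lam <= 4 -> lam <> 1 -> lam <> 3 -> 0 < x1 < 1 ->
     (exists l, Un_cv (xn lam x1) l) -> box_dim (Sset lam x1) 0.
Proof.
  intros lam x1 Hl H1 H3 Hx [l Hc].
  apply (geometric_tail_box_dim_zero (xn lam x1) l).
  pose proof (orbit_unit_interval lam x1 ltac:(lra) ltac:(lra)) as Hunit.
  pose proof (limit_unit_interval _ l Hc Hunit) as Hl01.
  pose proof (orbit_limit_fixed lam x1 l Hc) as Hfix.
  assert (Hcase : l = 0 \/ l = 1 - 1 / lam).
  { unfold F in Hfix. destruct (Req_dec l 0) as [|Hl0]; [left; auto|right].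
    apply (Rmult_eq_reg_l (lam * l)); [|nra]. field_simplify; [nra|lra]. }
  pose proof (attracting_limit_geometric _ (F lam) l (xn_S lam x1) Hunit Hc) as Hatt.
  pose proof (repelling_limit_geometric _ (F lam) l (xn_S lam x1) Hunit Hc) as Hrep.
  destruct Hcase as [Hl0 | Hl1]; subst l.
  - destruct (Rlt_or_le lam 1) as [Hlt|Hge].
    + apply (Hatt 1 lam); [lra|lra|apply zero_attracting; lra].
    + apply (Hrep ((lam - 1) / (2 * lam)) ((lam + 1) / 2)); [apply Rdiv_lt_0_compat; lra|lra|].
      intros x Hx01. apply zero_repelling; lra.
  - assert (Hlam1 : 1 < lam).
    { destruct (Rlt_or_le 1 lam) as [|Hle]; auto. exfalso.
      assert (1 / lam > 1) by (apply (Rmult_lt_reg_r lam); [lra|]; field_simplify; lra). lra. }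
    destruct (Rlt_or_le lam 3) as [Hlt|Hge].
    + assert (Ha : Rabs (2 - lam) < 1) by (apply Rabs_def1; lra).
      apply (Hatt ((1 - Rabs (2 - lam)) / (2 * lam)) ((1 + Rabs (2 - lam)) / 2));
        [apply Rdiv_lt_0_compat; lra|pose proof (Rabs_pos (2 - lam)); lra|].
      intros x _. apply interior_attracting. lra.
    + apply (Hrep ((lam - 3) / (2 * lam)) ((lam - 1) / 2)); [apply Rdiv_lt_0_compat; lra|lra|].
      intros x _. apply interior_repelling. lra.
Qed.

Fixpoint horner (l : list R) (x : R) : R :=
  match l with nil => 0 | c :: l' => c + x * horner l' x end.

Fixpoint sum_abs (l : list R) : R :=
  match l with nil => 0 | c :: l' => Rabs c + sum_abs l' end.

Lemma sum_abs_pos l : 0 <= sum_abs l.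
Proof. induction l; simpl; [lra|]. pose proof (Rabs_pos a); lra. Qed.

Lemma horner_bound l x : Rabs x <= 1 -> Rabs (horner l x) <= sum_abs l.
Proof.
  intros Hx. induction l as [|c l IH]; simpl. { rewrite Rabs_R0; lra. }
  eapply Rle_trans; [apply Rabs_triang|]. rewrite Rabs_mult.
  pose proof (Rabs_pos x). pose proof (Rabs_pos (horner l x)). nra.
Qed.

(** * (d) Period-2 cycles with multiplier [-1] *)

(** The displacement [a1 + y |-> F (F (a1 + y)) - a1] along a 2-cycle whose
    multipliers have product [-1] is [P y = - y + A y^2 + B y^3 + C y^4]. *)
Definition cubic_quartic (A B C y : R) : R := - y + A * y^2 + B * y^3 + C * y^4.

Definition cubic_quartic_remainder (A B C : R) : list R :=
  (A*B + A^3) ::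
  (3*B^2 - 6*A*C - A^2*B) ::
  (- B*C - 5*A*B^2 + 8*A^2*C + A^3*B) ::
  (- 4*C^2 - 3*B^3 + 8*A*B*C + 3*A^2*B^2 - 4*A^3*C) ::
  (13*A*C^2 + 3*A*B^3 - 9*A^2*B*C + A^4*C) ::
  (9*B*C^2 + B^4 - 6*A*B^2*C - 12*A^2*C^2 + 4*A^3*B*C) ::
  (6*C^3 - B^3*C - 21*A*B*C^2 + 6*A^2*B^2*C + 4*A^3*C^2) ::
  (- 9*B^2*C^2 - 12*A*C^3 + 4*A*B^3*C + 12*A^2*B*C^2) ::
  (- 11*B*C^3 + B^4*C + 12*A*B^2*C^2 + 6*A^2*C^3) ::
  (- 4*C^4 + 4*B^3*C^2 + 12*A*B*C^3) ::
  (6*B^2*C^3 + 4*A*C^4) ::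
  (4*B*C^4) ::
  (C^5) :: nil.

Lemma cubic_quartic_twice A B C y :
  cubic_quartic A B C (cubic_quartic A B C y)
  = y - (2 * A^2 + 2 * B) * y^3 + y^4 * horner (cubic_quartic_remainder A B C) y.
Proof. unfold cubic_quartic, cubic_quartic_remainder. simpl horner. ring. Qed.

Section PeriodTwo.
Variables (lam a1 a2 : R).
Hypotheses (Hlam : 0 < lam) (F12 : F lam a1 = a2) (F21 : F lam a2 = a1).
Hypothesis flip : (lam * (1 - 2 * a1)) * (lam * (1 - 2 * a2)) = -1.

Lemma period2_fourth_iterate : exists K M, 0 < K /\ 0 <= M /\
  forall y, Rabs y <= 1 ->
    Rabs (F lam (F lam (F lam (F lam (a1 + y)))) - a1 - (y - K * y^3)) <= M * y^4.
Proof.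
  set (m1 := lam * (1 - 2 * a1)) in *. set (m2 := lam * (1 - 2 * a2)) in *.
  set (A := - lam * (m2 + m1^2)). set (B := 2 * lam^2 * m1). set (C := - lam^3).
  set (K := 2 * A^2 + 2 * B).
  assert (HK : 0 < K).
  { assert (E : K * m1^2 = 2 * lam^2 * (m1^6 + 1)).
    { transitivity (2 * lam^2 * (m1^6 + 1)
        + 2 * lam^2 * ((m1 * m2)^2 - 1 + 2 * m1^3 * (m1 * m2 + 1))).
      - unfold K, A, B. ring.
      - rewrite flip. ring. }
    assert (0 < m1^2) by (assert (m1 <> 0) by (intro E0; rewrite E0 in flip; lra); nra).
    assert (0 < 2 * lam^2 * (m1^6 + 1)).
    { assert (0 <= m1^6) by (replace (m1^6) with ((m1^3)^2) by ring; nra). nra. }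
    nra. }
  assert (Htwo : forall y, F lam (F lam (a1 + y)) = a1 + cubic_quartic A B C y).
  { intros y. rewrite (F_shift lam a1 a2 y F12), (F_shift lam a2 a1 _ F21). f_equal.
    fold m1 m2. transitivity (cubic_quartic A B C y + (m1 * m2 + 1) * y).
    - unfold cubic_quartic, A, B, C. ring.
    - rewrite flip. ring. }
  exists K, (sum_abs (cubic_quartic_remainder A B C)). split; [auto|].
  split; [apply sum_abs_pos|]. intros y Hy.
  rewrite Htwo, Htwo, cubic_quartic_twice.
  replace (a1 + (y - (2 * A^2 + 2 * B) * y^3 + y^4 * horner (cubic_quartic_remainder A B C) y)
    - a1 - (y - K * y^3)) with (y^4 * horner (cubic_quartic_remainder A B C) y) by (unfold K; ring).
  rewrite Rabs_mult, (Rabs_right (y^4)) by (apply Rle_ge; replace (y^4) with ((y^2)^2) by ring;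
    apply pow2_ge_0).
  rewrite (Rmult_comm (sum_abs (cubic_quartic_remainder A B C))).
  apply Rmult_le_compat_l; [replace (y^4) with ((y^2)^2) by ring; apply pow2_ge_0|].
  apply horner_bound; auto.
Qed.
End PeriodTwo.

Lemma closer_point x a b g : Rabs (x - a) <= g / 2 -> g <= Rabs (a - b) ->
  Rabs (x - a) <= Rabs (x - b).
Proof.
  intros H1 H2. pose proof (Rabs_triang (a - x) (x - b)) as H.
  replace (a - x + (x - b)) with (a - b) in H by ring.
  rewrite (Rabs_minus_sym a x) in H. lra.
Qed.

Lemma dist2_local a1 a2 b x : (b = a1 \/ b = a2) -> Rabs (x - b) <= Rabs (a1 - a2) / 2 ->
  dist2 x a1 a2 = Rabs (x - b).
Proof.
  intros [-> | ->] Hx; unfold dist2.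
  - apply Rmin_left. apply (closer_point x a1 a2 (Rabs (a1 - a2))); lra.
  - apply Rmin_right. apply (closer_point x a2 a1 (Rabs (a1 - a2))); auto.
    rewrite Rabs_minus_sym. lra.
Qed.

Lemma period2_point_rate lam a1 a2 a : 0 < lam -> a1 <> a2 ->
  F lam a1 = a2 -> F lam a2 = a1 ->
  (lam * (1 - 2 * a1)) * (lam * (1 - 2 * a2)) = -1 -> a = a1 \/ a = a2 ->
  exists delta, 0 < delta /\ forall x1, 0 < Rabs (x1 - a) < delta ->
    asymp_equiv (fun n => dist2 (xn lam x1 n) a1 a2) (fun n => Rpower (INR n) (-1/2)) /\
    box_dim (Sset lam x1) (2/3) /\ mink_nondegenerate (Sset lam x1).
Proof.
  intros Hlam Hne F12 F21 Hflip Ha.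
  set (m1 := lam * (1 - 2 * a1)) in *. set (m2 := lam * (1 - 2 * a2)) in *.
  assert (Hprod : Rabs m1 * Rabs m2 = 1) by (rewrite <- Rabs_mult, Hflip, Rabs_left; lra).
  pose proof (Rabs_pos m1). pose proof (Rabs_pos m2).
  set (mn := Rmin (Rabs m1) (Rabs m2)). set (Mx := Rmax (Rabs m1) (Rabs m2)).
  assert (Hmn : 0 < mn /\ mn <= Rabs m1 /\ mn <= Rabs m2).
  { unfold mn. split; [apply Rmin_pos; nra|split; [apply Rmin_l|apply Rmin_r]]. }
  assert (HMx : Rabs m1 <= Mx /\ Rabs m2 <= Mx) by (split; [apply Rmax_l|apply Rmax_r]).
  assert (HMx1 : 1 <= Mx) by nra.
  set (other := if Req_dec_T a a1 then a2 else a1).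
  assert (Hpair : F lam a = other /\ F lam other = a /\
    (lam * (1 - 2 * a)) * (lam * (1 - 2 * other)) = -1).
  { unfold other. destruct Req_dec_T as [->|Hn]; [auto|].
    destruct Ha as [-> | ->]; [contradiction|]. fold m1 m2. repeat split; auto; lra. }
  destruct Hpair as [Fa [Fo Hflip']].
  destruct (period2_fourth_iterate lam a other Hlam Fa Fo Hflip') as [K [M [HK [HM Htaylor]]]].
  apply (flip_cycle_rate lam (fun z => dist2 z a1 a2) (a1 :: a2 :: nil) mn Mx (Rabs (a1 - a2)) a 4
    (fun x => F lam (F lam (F lam (F lam x)))) K M); try lra; try lia; auto.
  - apply Rabs_pos_lt. intro. apply Hne. lra.
  - destruct Ha as [-> | ->]; [left|right; left]; auto.
  - intros x. unfold dist2, Rmin. destruct Rle_dec.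
    + exists a1. split; [left|]; auto.
    + exists a2. split; [right; left|]; auto.
  - intros b z Hb Hz. apply dist2_local; auto. destruct Hb as [<-|[<-|[]]]; auto.
  - intros p [<-|[<-|[]]].
    + exists a2. repeat split; [right; left| | |]; auto; fold m1; lra.
    + exists a1. repeat split; [left| | |]; auto; fold m2; lra.
Qed.

Lemma period2_flip_rate lam a1 a2 : 0 < lam -> a1 <> a2 ->
  F lam a1 = a2 -> F lam a2 = a1 ->
  (lam * (1 - 2 * a1)) * (lam * (1 - 2 * a2)) = -1 ->
  exists delta, 0 < delta /\ forall x1, x1 <> a1 -> x1 <> a2 -> dist2 x1 a1 a2 < delta ->
    asymp_equiv (fun n => dist2 (xn lam x1 n) a1 a2) (fun n => Rpower (INR n) (-1/2)) /\
    box_dim (Sset lam x1) (2/3) /\ mink_nondegenerate (Sset lam x1).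
Proof.
  intros Hlam Hne F12 F21 Hflip.
  destruct (period2_point_rate lam a1 a2 a1 Hlam Hne F12 F21 Hflip ltac:(auto)) as [d1 [Hd1 Hr1]].
  destruct (period2_point_rate lam a1 a2 a2 Hlam Hne F12 F21 Hflip ltac:(auto)) as [d2 [Hd2 Hr2]].
  exists (Rmin d1 d2). split; [apply Rmin_pos; auto|].
  intros x1 Hx1 Hx2 Hdist. pose proof (Rmin_l d1 d2). pose proof (Rmin_r d1 d2).
  unfold dist2, Rmin at 1 in Hdist. destruct Rle_dec.
  - apply Hr1. split; [apply Rabs_pos_lt; intro; apply Hx1; lra|lra].
  - apply Hr2. split; [apply Rabs_pos_lt; intro; apply Hx2; lra|lra].
Qed.

(** For [lam = 1 + sqrt 6] every 2-cycle has multiplier product [-1]: the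
    cycle satisfies [lam (1 - a1 - a2) = -1] and [lam a1 a2 = a1 + a2], while
    [lam^2 = 2 lam + 5]. *)
Lemma sqrt6_period2_flip a1 a2 : a1 <> a2 ->
  F (1 + sqrt 6) a1 = a2 -> F (1 + sqrt 6) a2 = a1 ->
  ((1 + sqrt 6) * (1 - 2 * a1)) * ((1 + sqrt 6) * (1 - 2 * a2)) = -1.
Proof.
  intros Hne H12 H21. set (lam := 1 + sqrt 6) in *.
  assert (Hs6 : sqrt 6 * sqrt 6 = 6) by (apply sqrt_sqrt; lra).
  assert (Hs6p : 0 <= sqrt 6) by apply sqrt_pos.
  assert (Hsq : lam * lam = 2 * lam + 5) by (unfold lam; nra).
  assert (Hsum : lam * (1 - a1 - a2) = -1).
  { assert (E2 : (a1 - a2) * (lam * (1 - a1 - a2) + 1) = 0).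
    { replace ((a1 - a2) * (lam * (1 - a1 - a2) + 1)) with (F lam a1 - F lam a2 + (a1 - a2))
        by (unfold F; ring). rewrite H12, H21. ring. }
    apply Rmult_integral in E2 as [E2|E2]; [exfalso; apply Hne; lra|lra]. }
  assert (Hprod : lam * (a1 * a2) = a1 + a2).
  { assert (E : F lam a1 = lam * a1 - lam * a1 * a1) by (unfold F; ring).
    rewrite H12 in E. assert (a1 * (lam * (1 - a1 - a2)) = - a1) by (rewrite Hsum; ring). nra. }
  replace ((lam * (1 - 2 * a1)) * (lam * (1 - 2 * a2))) with
    (lam * lam - 2 * lam * (lam * (a1 + a2)) + 4 * lam * (lam * (a1 * a2))) by ring.
  rewrite Hprod. replace (lam * (a1 + a2)) with (lam + 1) by lra. nra.
Qed.

Lemma part_d : forall a1 a2, a1 <> a2 ->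
     F (1 + sqrt 6) a1 = a2 -> F (1 + sqrt 6) a2 = a1 ->
     exists delta, 0 < delta /\ forall x1, x1 <> a1 -> x1 <> a2 ->
       dist2 x1 a1 a2 < delta ->
       asymp_equiv (fun n => dist2 (xn (1 + sqrt 6) x1 n) a1 a2)
                   (fun n => Rpower (INR n) (-1/2)) /\
       box_dim (Sset (1 + sqrt 6) x1) (2/3) /\
       mink_nondegenerate (Sset (1 + sqrt 6) x1).
Proof.
  intros a1 a2 Hne H12 H21. apply period2_flip_rate; auto.
  - pose proof (sqrt_pos 6). lra.
  - apply sqrt6_period2_flip; auto.
Qed.

Lemma one_sided_cycle_rate lam (D : R -> R) (pts : list R) mn Mx g a (q : nat) (G : R -> R) K M :
  0 < lam -> 0 < mn -> 0 < g -> 1 <= Mx -> (1 <= q)%nat -> In a pts ->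
  (forall x, exists p, In p pts /\ D x = Rabs (x - p)) ->
  (forall b z, In b pts -> Rabs (z - b) <= g / 2 -> D z = Rabs (z - b)) ->
  (forall p, In p pts -> exists b, In b pts /\ F lam p = b /\ mn <= Rabs (lam * (1 - 2 * p)) <= Mx) ->
  (forall x, G x = Nat.iter q (F lam) x) ->
  0 < K -> 0 <= M ->
  (forall u, 0 < u <= 1 -> Rabs ((a - G (a - u)) - (u - K * u^2)) <= M * u^3) ->
  exists delta, 0 < delta <= cycle_radius lam mn Mx g /\ forall x1 n0, (1 <= n0)%nat ->
    0 < a - xn lam x1 n0 <= delta ->
    (forall n, (1 <= n <= n0)%nat -> 0 < D (xn lam x1 n) <= cycle_radius lam mn Mx g) ->
    asymp_equiv (fun n => D (xn lam x1 n)) (fun n => / INR n) /\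
    box_dim (Sset lam x1) (1/2) /\ mink_nondegenerate (Sset lam x1).
Proof.
  intros Hlam Hmn Hg HMx Hq Ha Hatt Hloc Hcyc HG HK HM Htaylor.
  destruct (cycle_radius_spec lam mn Mx g Hlam Hmn Hg) as [_ [_ [_ Hrg]]].
  destruct (quadratic_escape (fun u => a - G (a - u)) K M 1 HK HM ltac:(lra) Htaylor)
    as [r0 [Hr0 Hesc]].
  destruct (return_radius lam mn Mx g Hlam Hmn Hg r0 q Hr0 HMx) as [delta [Hd [Hdr0 [Hdr HdL]]]].
  exists delta. split; [split; auto|]. intros x1 n0 Hn0 Hentry Hinit.
  set (y := fun k => xn lam x1 (n0 + q * k)).
  set (w := fun k => a - y k).
  assert (Hw0 : w 0%nat = a - xn lam x1 n0)
    by (unfold w, y; rewrite Nat.mul_0_r, Nat.add_0_r; reflexivity).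
  assert (Hwrec : forall k, w (S k) = a - G (a - w k)).
  { intros k. unfold w, y. replace (a - (a - xn lam x1 (n0 + q * k))) with (xn lam x1 (n0 + q * k))
      by ring. rewrite HG, <- xn_add by lia. do 2 f_equal. lia. }
  pose proof (Hesc w ltac:(rewrite Hw0; lra) Hwrec) as Hw.
  assert (Hmono : forall k, w k <= w 0%nat).
  { induction k as [|k IH]; [lra|]. destruct (Hw k) as [[Hp _] [Hgap _]].
    assert (0 <= K / 2 * (w k)^2) by (apply Rmult_le_pos; [lra|apply pow_le; lra]). lra. }
  assert (Hret : forall k, D (y k) = w k /\ 0 < w k <= delta).
  { intros k. destruct (Hw k) as [[Hp _] _]. pose proof (Hmono k).
    assert (Hyk : 0 < a - y k <= delta) by (unfold w in *; lra).
    split; [|unfold w; lra].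
    rewrite (Hloc a) by (auto; rewrite Rabs_left; lra). rewrite Rabs_left by lra. unfold w; ring. }
  assert (Hreturns : forall k, 0 < D (xn lam x1 (n0 + q * k)%nat) <= delta).
  { intros k. change (0 < D (y k) <= delta). destruct (Hret k) as [HD Hb]. rewrite HD. exact Hb. }
  pose proof (cycle_orbit_comparable lam D pts mn Mx g Hlam Hmn Hg Hatt Hloc Hcyc
    x1 delta n0 q HMx Hn0 Hq HdL Hinit Hreturns) as Hnear.
  apply (rate_one_conclusion (xn lam x1) pts (fun n => D (xn lam x1 n)) n0 q
    (/ w 0%nat) (K / 2) (3 * K) (mn / 2) (2 * Mx) w y (-1) (K / 2)); auto; try lra.
  - apply Rinv_0_lt_compat. lra.
  - intros n Hn. apply Hnear; auto.
  - intros n Hn. apply Hnear; auto.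
  - intros n Hn. destruct (Hatt (xn lam x1 n)) as [p [Hp HD]]. exists p. split; auto. lra.
  - intros k. destruct (Hret k) as [HD _]. rewrite <- HD. reflexivity.
  - intros k. exists (n0 + q * k)%nat. split; [lia|reflexivity].
  - intros k. destruct (Hw k) as [_ [_ Hbd]]. exact Hbd.
  - intros k. destruct (Hw k) as [_ [Hgap _]].
    replace (-1 * (y k - y (S k))) with (w k - w (S k)) by (unfold w; ring). exact Hgap.
Qed.

Lemma near_step_side lam a b y : 0 < lam -> F lam a = b -> y <> 0 ->
  lam * (1 - 2 * a) <> 0 -> Rabs y <= Rabs (lam * (1 - 2 * a)) / (2 * lam) ->
  0 < (F lam (a + y) - b) * (y * (lam * (1 - 2 * a))).
Proof.
  intros Hl HF Hy Hm Hyr. rewrite (F_shift lam a b y HF).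
  set (m := lam * (1 - 2 * a)) in *.
  assert (Hly : lam * Rabs y <= Rabs m / 2).
  { apply (Rmult_le_compat_l lam) in Hyr; [|lra].
    replace (lam * (Rabs m / (2 * lam))) with (Rabs m / 2) in Hyr by (field; lra). exact Hyr. }
  assert (Hym : lam * y * m <= lam * Rabs y * Rabs m).
  { rewrite Rmult_assoc, (Rmult_assoc lam (Rabs y)). apply Rmult_le_compat_l; [lra|].
    rewrite <- Rabs_mult. apply Rle_abs. }
  assert (Hm2 : Rabs m * Rabs m = m * m)
    by (rewrite <- Rabs_mult; apply Rabs_right; apply Rle_ge, Rle_0_sqr).
  assert (0 < m * m) by (apply Rsqr_pos_lt; auto).
  assert (0 < y * y) by (apply Rsqr_pos_lt; auto).
  replace ((b + (m * y - lam * y ^ 2) - b) * (y * m)) with ((y * y) * (m * m - lam * y * m)) by ring.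
  apply Rmult_lt_0_compat; [lra|]. pose proof (Rabs_pos y). pose proof (Rabs_pos m). nra.
Qed.

(** * (e) Period-3 cycles with multiplier [+1] *)

(** Composition of three steps [y |-> m y - lam y^2]: the linear term is the
    product of the multipliers and the quadratic one is [- K]. *)
Definition three_steps_remainder (m1 m2 m3 l : R) : list R :=
  (2*m1*m3*l^2 + 2*m1*m2^2*l^2 + 2*m1^3*m2*l^2) ::
  (- m3*l^3 - m2^2*l^3 - 6*m1^2*m2*l^3 - m1^4*l^3) ::
  (6*m1*m2*l^4 + 4*m1^3*l^4) ::
  (- 2*m2*l^5 - 6*m1^2*l^5) ::
  (4*m1*l^6) ::
  (- l^7) :: nil.

Lemma three_steps_expansion m1 m2 m3 l y :
  let Y1 := m1 * y - l * y^2 in let Y2 := m2 * Y1 - l * Y1^2 in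
  m3 * Y2 - l * Y2^2 = m1 * m2 * m3 * y + (- (l * (m2 * m3 + m3 * m1^2 + m1^2 * m2^2))) * y^2
    + y^3 * horner (three_steps_remainder m1 m2 m3 l) y.
Proof. simpl. unfold three_steps_remainder. simpl horner. ring. Qed.

Lemma period3_third_iterate lam a1 a2 a3 :
  F lam a1 = a2 -> F lam a2 = a3 -> F lam a3 = a1 ->
  (lam * (1 - 2 * a1)) * (lam * (1 - 2 * a2)) * (lam * (1 - 2 * a3)) = 1 ->
  exists M, 0 <= M /\ forall u, 0 < u <= 1 ->
    Rabs ((a1 - F lam (F lam (F lam (a1 - u))))
      - (u - (- (lam * ((lam * (1 - 2 * a2)) * (lam * (1 - 2 * a3))
          + (lam * (1 - 2 * a3)) * (lam * (1 - 2 * a1))^2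
          + (lam * (1 - 2 * a1))^2 * (lam * (1 - 2 * a2))^2))) * u^2)) <= M * u^3.
Proof.
  intros F1 F2 F3 Hprod.
  set (m1 := lam * (1 - 2 * a1)) in *. set (m2 := lam * (1 - 2 * a2)) in *.
  set (m3 := lam * (1 - 2 * a3)) in *.
  set (K := - (lam * (m2 * m3 + m3 * m1^2 + m1^2 * m2^2))).
  set (Q := three_steps_remainder m1 m2 m3 lam).
  assert (H3 : forall y, F lam (F lam (F lam (a1 + y)))
    = a1 + (m1 * m2 * m3 * y + K * y^2 + y^3 * horner Q y)).
  { intros y. rewrite (F_shift lam a1 a2 y F1), (F_shift lam a2 a3 _ F2), (F_shift lam a3 a1 _ F3).
    fold m1 m2 m3. f_equal. exact (three_steps_expansion m1 m2 m3 lam y). }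
  exists (sum_abs Q). split; [apply sum_abs_pos|]. intros u Hu.
  replace (a1 - u) with (a1 + - u) by ring. rewrite H3, Hprod.
  replace (a1 - (a1 + (1 * - u + K * (- u)^2 + (- u)^3 * horner Q (- u))) - (u - K * u^2))
    with (u^3 * horner Q (- u)) by ring.
  rewrite Rabs_mult, (Rabs_right (u^3)) by (apply Rle_ge, pow_le; lra).
  rewrite (Rmult_comm (sum_abs Q)). apply Rmult_le_compat_l; [apply pow_le; lra|].
  apply horner_bound. rewrite Rabs_Ropp, Rabs_right; lra.
Qed.

(** For [lam = 1 + t] with [t^2 = 8], the points of period 3 are the roots of
    the cubic [period3_cubic t]: [F^3 x - x] factors through its square. *)
Definition period3_cubic (t x : R) : R := (25 + 11 * t) * x^3 - (42 + 35/2 * t) * x^2 + (21 + 7 * t) * x - (3 + t/2).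

Lemma third_iterate_factor t x : F (1 + t) (F (1 + t) (F (1 + t) x)) - x + x * ((1 + t) * x - (1 + t) + 1) * (period3_cubic t x)^2
  = (t^2 - 8) * ((3/4)*x*t - (3/4)*x^2 - (63/4)*x^2*t - 6*x^2*t^2 - x^2*t^3 + 15*x^3 + (213/2)*x^3*t + 58*x^3*t^2 + 14*x^3*t^3 + 2*x^3*t^4 - (171/2)*x^4 - (749/2)*x^4*t - 235*x^4*t^2 - 66*x^4*t^3 - 13*x^4*t^4 - x^4*t^5 + 238*x^5 + (3039/4)*x^5*t + 502*x^5*t^2 + 152*x^5*t^3 + 34*x^5*t^4 + 4*x^5*t^5 - (1403/4)*x^6 - (3571/4)*x^6*t - 592*x^6*t^2 - 186*x^6*t^3 - 44*x^6*t^4 - 6*x^6*t^5 + 262*x^7 + 562*x^7*t + 364*x^7*t^2 + 116*x^7*t^3 + 28*x^7*t^4 + 4*x^7*t^5 - 78*x^8 - 146*x^8*t - 91*x^8*t^2 - 29*x^8*t^3 - 7*x^8*t^4 - x^8*t^5).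
Proof. unfold F, period3_cubic. field. Qed.

Lemma sqrt8_bounds : 2.828 < sqrt 8 < 2.829 /\ sqrt 8 * sqrt 8 = 8.
Proof.
  assert (H : sqrt 8 * sqrt 8 = 8) by (apply sqrt_sqrt; lra).
  pose proof (sqrt_pos 8). split; [|auto]. split; nra.
Qed.

Lemma period3_root a : 0 < a -> F (1 + sqrt 8) a <> a ->
  F (1 + sqrt 8) (F (1 + sqrt 8) (F (1 + sqrt 8) a)) = a -> period3_cubic (sqrt 8) a = 0.
Proof.
  intros Ha Hfa Hcyc. destruct sqrt8_bounds as [_ Ht].
  set (t := sqrt 8) in *. set (lam := 1 + t) in *.
  pose proof (third_iterate_factor t a) as E. fold lam in E. rewrite Hcyc in E.
  replace (t^2) with 8 in E by (simpl; lra). replace ((8 - 8) * _) with 0 in E by ring.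
  assert (E' : a * (lam * a - lam + 1) * (period3_cubic t a)^2 = 0) by lra.
  apply Rmult_integral in E' as [E'|E'].
  - apply Rmult_integral in E' as [E'|E']; [lra|].
    exfalso. apply Hfa. unfold F. nra.
  - destruct (Req_dec (period3_cubic t a) 0) as [|Hn]; auto.
    exfalso. apply (pow_nonzero _ 2 Hn); auto.
Qed.

Lemma quadratic_three_roots al be ga x1 x2 x3 : x1 <> x2 -> x1 <> x3 -> x2 <> x3 ->
  al * x1^2 + be * x1 + ga = 0 -> al * x2^2 + be * x2 + ga = 0 -> al * x3^2 + be * x3 + ga = 0 ->
  al = 0 /\ be = 0 /\ ga = 0.
Proof.
  intros H12 H13 H23 E1 E2 E3.
  assert (E12 : (x1 - x2) * (al * (x1 + x2) + be) = 0) by nra.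
  assert (E13 : (x1 - x3) * (al * (x1 + x3) + be) = 0) by nra.
  apply Rmult_integral in E12 as [E12|E12]; [exfalso; apply H12; lra|].
  apply Rmult_integral in E13 as [E13|E13]; [exfalso; apply H13; lra|].
  assert (E : al * (x2 - x3) = 0) by nra.
  apply Rmult_integral in E as [E|E]; [|exfalso; apply H23; lra].
  subst al. split; [auto|]. assert (be = 0) by lra. subst be. split; auto. lra.
Qed.

Lemma cubic_sign_location a1 a2 a3 p : a1 < a2 -> a2 < a3 ->
  ((p - a1) * (p - a2) * (p - a3) < 0 -> p < a1 \/ a2 < p < a3) /\
  (0 < (p - a1) * (p - a2) * (p - a3) -> a1 < p < a2 \/ a3 < p).
Proof.
  intros H12 H23.
  assert (Hsign : forall x y z, x * y * z = x * (y * z)) by (intros; ring).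
  rewrite Hsign. split; intros Hs.
  - destruct (Rlt_or_le p a1); [left; auto|right].
    destruct (Rle_or_lt p a2) as [Hp2|Hp2].
    + exfalso. assert (0 <= (p - a2) * (p - a3)) by nra. nra.
    + split; auto. destruct (Rlt_or_le p a3); auto. exfalso.
      assert (0 <= (p - a2) * (p - a3)) by nra. nra.
  - destruct (Rle_or_lt p a1) as [Hp1|Hp1].
    + exfalso. assert (0 < (p - a2) * (p - a3)) by nra. nra.
    + destruct (Rlt_or_le p a2); [left; auto|right].
      destruct (Rlt_or_le a3 p); auto. exfalso.
      assert ((p - a2) * (p - a3) <= 0) by nra. nra.
Qed.

Lemma period3_cubic_roots t a1 a2 a3 : a1 < a2 -> a2 < a3 ->
  period3_cubic t a1 = 0 -> period3_cubic t a2 = 0 -> period3_cubic t a3 = 0 ->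
  forall x, period3_cubic t x = (25 + 11 * t) * ((x - a1) * (x - a2) * (x - a3)).
Proof.
  intros H12 H23 C1 C2 C3. set (k3 := 25 + 11 * t).
  set (al := - (42 + 35/2 * t) + k3 * (a1 + a2 + a3)).
  set (be := (21 + 7 * t) - k3 * (a1 * a2 + a1 * a3 + a2 * a3)).
  set (ga := - (3 + t/2) + k3 * (a1 * a2 * a3)).
  assert (HD : forall x, period3_cubic t x - k3 * ((x - a1) * (x - a2) * (x - a3))
    = al * x^2 + be * x + ga) by (intros x; unfold period3_cubic, al, be, ga, k3; ring).
  destruct (quadratic_three_roots al be ga a1 a2 a3) as [Ha [Hb Hg]]; try lra;
    try (rewrite <- HD; lra).
  intros x. pose proof (HD x) as E. rewrite Ha, Hb, Hg in E. lra.
Qed.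

(** The 3-cycle of [F (1 + sqrt 8)]: location of its points and the product
    of its multipliers, which equals [lam^3 * 8 * (1/2 - a1)(1/2 - a2)(1/2 - a3)]
    [= lam^3 * period3_cubic (1/2) / (25 + 11 t) = 1]. *)
Lemma sqrt8_cycle a1 a2 a3 : 0 < a1 -> a1 < a2 -> a2 < a3 -> a3 < 1 ->
  F (1 + sqrt 8) a1 = a2 -> F (1 + sqrt 8) a2 = a3 -> F (1 + sqrt 8) a3 = a1 ->
  (15/100 <= a1 <= 17/100 /\ 1/2 < a2 <= 53/100 /\ 95/100 <= a3 <= 96/100) /\
  ((1 + sqrt 8) * (1 - 2 * a1)) * ((1 + sqrt 8) * (1 - 2 * a2)) * ((1 + sqrt 8) * (1 - 2 * a3)) = 1.
Proof.
  intros H0 H12 H23 H31 F1 F2 F3.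
  destruct sqrt8_bounds as [[Ht1 Ht2] Ht].
  assert (C1 : period3_cubic (sqrt 8) a1 = 0)
    by (apply period3_root; [lra|rewrite F1; lra|rewrite F1, F2, F3; auto]).
  assert (C2 : period3_cubic (sqrt 8) a2 = 0)
    by (apply period3_root; [lra|rewrite F2; lra|rewrite F2, F3, F1; auto]).
  assert (C3 : period3_cubic (sqrt 8) a3 = 0)
    by (apply period3_root; [lra|rewrite F3; lra|rewrite F3, F1, F2; auto]).
  set (t := sqrt 8) in *. set (lam := 1 + t) in *. set (k3 := 25 + 11 * t).
  assert (Hk3 : 0 < k3) by (unfold k3; lra).
  pose proof (period3_cubic_roots t a1 a2 a3 H12 H23 C1 C2 C3) as Hfac. fold k3 in Hfac.
  assert (Hloc : forall p, (period3_cubic t p < 0 -> p < a1 \/ a2 < p < a3) /\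
                           (0 < period3_cubic t p -> a1 < p < a2 \/ a3 < p)).
  { intros p. rewrite Hfac. destruct (cubic_sign_location a1 a2 a3 p H12 H23) as [Hn Hp].
    split; intros Hs; [apply Hn|apply Hp]; nra. }
  destruct (proj1 (Hloc (15/100)) ltac:(unfold period3_cubic; lra)) as [L1|L1];
  destruct (proj2 (Hloc (17/100)) ltac:(unfold period3_cubic; lra)) as [L2|L2];
  destruct (proj2 (Hloc (1/2)) ltac:(unfold period3_cubic; lra)) as [L3|L3];
  destruct (proj1 (Hloc (53/100)) ltac:(unfold period3_cubic; lra)) as [L4|L4];
  destruct (proj1 (Hloc (95/100)) ltac:(unfold period3_cubic; lra)) as [L5|L5];
  destruct (proj2 (Hloc (96/100)) ltac:(unfold period3_cubic; lra)) as [L6|L6];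
  try lra.
  split; [lra|].
  assert (Hc05 : period3_cubic t (1/2) = 1/8) by (unfold period3_cubic; field).
  rewrite Hfac in Hc05.
  assert (Hl3 : lam * lam * lam = k3) by (unfold lam, k3; nra).
  replace (lam * (1 - 2 * a1) * (lam * (1 - 2 * a2)) * (lam * (1 - 2 * a3))) with
    ((lam * lam * lam) * 8 * ((1/2 - a1) * (1/2 - a2) * (1/2 - a3))) by field.
  rewrite Hl3. apply (Rmult_eq_reg_l (/ 8)); [|lra]. nra.
Qed.

Lemma sqrt8_cycle_signs lam a1 a2 a3 : 3828/1000 < lam < 3829/1000 ->
  15/100 <= a1 <= 17/100 -> 1/2 < a2 <= 53/100 -> 95/100 <= a3 <= 96/100 ->
  0 < lam * (1 - 2 * a1) /\ lam * (1 - 2 * a2) < 0 /\ lam * (1 - 2 * a3) < 0 /\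
  0 < - (lam * ((lam * (1 - 2 * a2)) * (lam * (1 - 2 * a3))
        + (lam * (1 - 2 * a3)) * (lam * (1 - 2 * a1))^2
        + (lam * (1 - 2 * a1))^2 * (lam * (1 - 2 * a2))^2)).
Proof.
  intros Hl H1 H2 H3.
  set (b1 := 1 - 2 * a1). set (b2 := 1 - 2 * a2). set (b3 := 1 - 2 * a3).
  assert (Hb1 : 66/100 <= b1 <= 70/100) by (unfold b1; lra).
  assert (Hb2 : -6/100 <= b2 < 0) by (unfold b2; lra).
  assert (Hb3 : -92/100 <= b3 <= -90/100) by (unfold b3; lra).
  split; [nra|]. split; [nra|]. split; [nra|].
  assert (E1 : b2 * b3 <= 6/100 * (92/100)) by nra.
  assert (Eb1 : 4356/10000 <= b1^2 <= 49/100) by (simpl; nra).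
  assert (Eb2 : b2^2 <= 36/10000) by (simpl; nra).
  assert (E2 : b3 * b1^2 <= - (90/100) * (4356/10000)) by nra.
  assert (E3 : lam * (b3 * b1^2) <= 3828/1000 * (- (90/100) * (4356/10000))) by nra.
  assert (Hl2 : lam^2 <= 1467/100) by (simpl; nra).
  assert (E4 : lam^2 * (b1^2 * b2^2) <= 1467/100 * (49/100 * (36/10000)))
    by (apply Rmult_le_compat; nra).
  assert (Hinner : b2 * b3 + lam * (b3 * b1^2) + lam^2 * (b1^2 * b2^2) < 0) by lra.
  replace (- (lam * (lam * b2 * (lam * b3) + lam * b3 * (lam * b1) ^ 2 + (lam * b1) ^ 2 * (lam * b2) ^ 2)))
    with (- (lam^3) * (b2 * b3 + lam * (b3 * b1^2) + lam^2 * (b1^2 * b2^2))) by ring.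
  assert (0 < lam^3) by (apply pow_lt; lra). nra.
Qed.

Lemma dist3_local a1 a2 a3 b x : a1 < a2 -> a2 < a3 -> (b = a1 \/ b = a2 \/ b = a3) ->
  Rabs (x - b) <= Rmin (a2 - a1) (a3 - a2) / 2 -> dist3 x a1 a2 a3 = Rabs (x - b).
Proof.
  intros H12 H23 Hb Hx. set (g := Rmin (a2 - a1) (a3 - a2)) in *.
  assert (Hg : g <= a2 - a1 /\ g <= a3 - a2) by (split; [apply Rmin_l|apply Rmin_r]).
  assert (Hcl : forall c, (c = a1 \/ c = a2 \/ c = a3) -> Rabs (x - b) <= Rabs (x - c)).
  { intros c Hc. destruct (Req_dec c b) as [->|Hne]; [lra|].
    apply (closer_point x b c g Hx).
    destruct Hb as [-> | [-> | ->]]; destruct Hc as [-> | [-> | ->]];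
      try (exfalso; apply Hne; reflexivity); unfold Rabs; destruct Rcase_abs; lra. }
  pose proof (Hcl a1 ltac:(auto)). pose proof (Hcl a2 ltac:(auto)). pose proof (Hcl a3 ltac:(auto)).
  unfold dist3. destruct Hb as [-> | [-> | ->]]; unfold Rmin; repeat destruct Rle_dec; lra.
Qed.

Lemma cycle_entry_step lam a b y mn Mx g : 0 < lam -> 0 < mn -> 0 < g -> F lam a = b ->
  mn <= Rabs (lam * (1 - 2 * a)) <= Mx -> 0 < Rabs y <= cycle_radius lam mn Mx g ->
  0 < (F lam (a + y) - b) * (y * (lam * (1 - 2 * a))) /\
  Rabs (F lam (a + y) - b) <= 2 * Mx * Rabs y.
Proof.
  intros Hl Hmn Hg HF Hm Hy. destruct (cycle_radius_spec lam mn Mx g Hl Hmn Hg) as [_ [Hr _]].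
  assert (Hyr : Rabs y <= Rabs (lam * (1 - 2 * a)) / (2 * lam)).
  { apply Rle_trans with (mn / (2 * lam)); [lra|]. unfold Rdiv.
    apply Rmult_le_compat_r; [left; apply Rinv_0_lt_compat|]; lra. }
  split.
  - apply near_step_side; auto.
    + intro E. rewrite E, Rabs_R0 in Hy. lra.
    + intro E. rewrite E, Rabs_R0 in Hm. lra.
  - destruct (near_step lam a b y Hl HF Hyr) as [_ Hup].
    apply Rle_trans with (2 * Rabs (lam * (1 - 2 * a)) * Rabs y); auto.
    pose proof (Rabs_pos y). apply Rmult_le_compat_r; lra.
Qed.

Section PeriodThree.
Variables (lam a1 a2 a3 : R).
Hypotheses (Hlam : 0 < lam) (H12 : a1 < a2) (H23 : a2 < a3)
  (F1 : F lam a1 = a2) (F2 : F lam a2 = a3) (F3 : F lam a3 = a1).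
Let m1 := lam * (1 - 2 * a1).
Let m2 := lam * (1 - 2 * a2).
Let m3 := lam * (1 - 2 * a3).
Hypotheses (Hm1 : 0 < m1) (Hm2 : m2 < 0) (Hm3 : m3 < 0) (Hprod : m1 * m2 * m3 = 1)
  (HK : 0 < - (lam * (m2 * m3 + m3 * m1^2 + m1^2 * m2^2))).

Let g := Rmin (a2 - a1) (a3 - a2).
Let mn := Rmin m1 (Rmin (- m2) (- m3)).
Let Mx := Rmax m1 (Rmax (- m2) (- m3)).
Let pts := a1 :: a2 :: a3 :: nil.

(** Separation of the points and bounds on the multipliers; [Mx >= 1]
    because the multipliers multiply to 1. *)
Lemma period3_constants : 0 < g /\ 0 < mn /\ 1 <= Mx /\
  mn <= Rabs m1 <= Mx /\ mn <= Rabs m2 <= Mx /\ mn <= Rabs m3 <= Mx.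
Proof.
  rewrite (Rabs_right m1), (Rabs_left m2), (Rabs_left m3) by lra.
  assert (Hmn : 0 < mn /\ mn <= m1 /\ mn <= - m2 /\ mn <= - m3)
    by (unfold mn, Rmin; repeat destruct Rle_dec; lra).
  assert (HMx : m1 <= Mx /\ - m2 <= Mx /\ - m3 <= Mx)
    by (unfold Mx, Rmax; repeat destruct Rle_dec; lra).
  split; [apply Rmin_pos; lra|]. split; [lra|]. split; [|lra].
  destruct (Rle_or_lt 1 Mx) as [|Hc]; auto. exfalso.
  assert (m1 * (- m2) < 1 * 1) by (apply Rmult_le_0_lt_compat; lra).
  assert (m1 * (- m2) * (- m3) < 1 * 1) by (apply Rmult_le_0_lt_compat; try lra; nra).
  lra.
Qed.

Lemma period3_distance_attained : forall x, exists p, In p pts /\ dist3 x a1 a2 a3 = Rabs (x - p).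
Proof.
  intros x. unfold dist3, Rmin. repeat destruct Rle_dec.
  all: first [exists a1; split; [left|]; reflexivity
             |exists a2; split; [right; left|]; reflexivity
             |exists a3; split; [right; right; left|]; reflexivity].
Qed.

Lemma period3_distance_local : forall b z, In b pts -> Rabs (z - b) <= g / 2 ->
  dist3 z a1 a2 a3 = Rabs (z - b).
Proof.
  intros b z Hb Hz. apply dist3_local; auto. destruct Hb as [<-|[<-|[<-|[]]]]; auto.
Qed.

Lemma period3_is_cycle : forall p, In p pts ->
  exists b, In b pts /\ F lam p = b /\ mn <= Rabs (lam * (1 - 2 * p)) <= Mx.
Proof.
  destruct period3_constants as [_ [_ [_ [Hb1 [Hb2 Hb3]]]]].
  intros p [<-|[<-|[<-|[]]]].
  - exists a2. split; [right; left; auto|auto].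
  - exists a3. split; [right; right; left; auto|auto].
  - exists a1. split; [left; auto|auto].
Qed.

Lemma period3_returns : exists delta0, 0 < delta0 <= cycle_radius lam mn Mx g /\
  forall x1 n0, (1 <= n0)%nat -> 0 < a1 - xn lam x1 n0 <= delta0 ->
    (forall n, (1 <= n <= n0)%nat -> 0 < dist3 (xn lam x1 n) a1 a2 a3 <= cycle_radius lam mn Mx g) ->
    asymp_equiv (fun n => dist3 (xn lam x1 n) a1 a2 a3) (fun n => / INR n) /\
    box_dim (Sset lam x1) (1/2) /\ mink_nondegenerate (Sset lam x1).
Proof.
  destruct period3_constants as [Hg [Hmn [HMx _]]].
  destruct (period3_third_iterate lam a1 a2 a3 F1 F2 F3 Hprod) as [M [HM Htaylor]].
  apply (one_sided_cycle_rate lam (fun z => dist3 z a1 a2 a3) pts mn Mx g a1 3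
    (fun x => F lam (F lam (F lam x))) (- (lam * (m2 * m3 + m3 * m1^2 + m1^2 * m2^2))) M);
    auto; try lia.
  - left; reflexivity.
  - exact period3_distance_attained.
  - exact period3_distance_local.
  - exact period3_is_cycle.
Qed.

(** Leaving [a2] from below, or [a3] from above, the orbit jumps to the other
    side of the next cycle point (the multipliers there are negative). *)
Lemma period3_flip_step a b y : (a = a2 /\ b = a3) \/ (a = a3 /\ b = a1) ->
  0 < Rabs y <= cycle_radius lam mn Mx g ->
  (F lam (a + y) - b) * y < 0 /\ Rabs (F lam (a + y) - b) <= 2 * Mx * Rabs y.
Proof.
  intros Hab Hy. destruct period3_constants as [Hg [Hmn [_ [_ [Hb2 Hb3]]]]].
  assert (Hneg : lam * (1 - 2 * a) < 0 /\ F lam a = b /\ mn <= Rabs (lam * (1 - 2 * a)) <= Mx)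
    by (destruct Hab as [[-> ->]|[-> ->]]; auto).
  destruct Hneg as [Hneg [HF Hm]].
  destruct (cycle_entry_step lam a b y mn Mx g Hlam Hmn Hg HF Hm Hy) as [Hs Hb].
  split; auto. nra.
Qed.

Lemma period3_below_a2 y : 0 < y <= cycle_radius lam mn Mx g ->
  0 < F lam (a2 - y) - a3 <= 2 * Mx * y.
Proof.
  intros Hy. destruct (period3_flip_step a2 a3 (- y) ltac:(auto)) as [Hs Hb].
  { rewrite Rabs_Ropp, Rabs_right; lra. }
  replace (a2 + - y) with (a2 - y) in Hs, Hb by ring. rewrite Rabs_Ropp, (Rabs_right y) in Hb by lra.
  apply Rabs_le_bounds in Hb. split; nra.
Qed.

Lemma period3_above_a3 z : 0 < z <= cycle_radius lam mn Mx g ->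
  0 < a1 - F lam (a3 + z) <= 2 * Mx * z.
Proof.
  intros Hz. destruct (period3_flip_step a3 a1 z ltac:(auto)) as [Hs Hb].
  { rewrite Rabs_right; lra. }
  rewrite (Rabs_right z) in Hb by lra. apply Rabs_le_bounds in Hb. split; nra.
Qed.

Lemma period3_near_point b z : In b pts -> 0 < Rabs (z - b) <= cycle_radius lam mn Mx g ->
  0 < dist3 z a1 a2 a3 <= cycle_radius lam mn Mx g.
Proof.
  intros Hb Hz. destruct period3_constants as [Hg [Hmn _]].
  destruct (cycle_radius_spec lam mn Mx g Hlam Hmn Hg) as [_ [_ [_ Hrg]]].
  rewrite (period3_distance_local b z Hb) by lra. exact Hz.
Qed.

(** Entering through any of the three one-sided neighbourhoods, the orbit
    reaches [(a1 - delta0, a1)] within three steps, staying near the cycle. *)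
Lemma period3_rate : exists delta, 0 < delta /\ forall x1,
  (a1 - delta < x1 < a1 \/ a2 - delta < x1 < a2 \/ a3 < x1 < a3 + delta) ->
  asymp_equiv (fun n => dist3 (xn lam x1 n) a1 a2 a3) (fun n => / INR n) /\
  box_dim (Sset lam x1) (1/2) /\ mink_nondegenerate (Sset lam x1).
Proof.
  destruct period3_constants as [Hg [Hmn [HMx _]]].
  destruct period3_returns as [delta0 [[Hd0 Hd0R] Hrate]].
  set (radius := cycle_radius lam mn Mx g) in *.
  set (L2 := 2 * Mx).
  set (delta := delta0 / L2^2).
  assert (Hdelta : 0 < delta) by (apply Rdiv_lt_0_compat; [lra|apply pow_lt; unfold L2; lra]).
  assert (HdL2 : L2 * (L2 * delta) = delta0) by (unfold delta, L2; field; lra).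
  assert (HdL1 : L2 * delta <= delta0) by (unfold L2 in *; nra).
  assert (Hdd : delta <= delta0) by (unfold L2 in *; nra).
  exists delta. split; auto. intros x1 Hx1.
  assert (Hx2 : xn lam x1 2 = F lam x1) by reflexivity.
  assert (Hx3 : xn lam x1 3 = F lam (F lam x1)) by reflexivity.
  destruct Hx1 as [Hx|[Hx|Hx]].
  - apply (Hrate x1 1%nat); [lia|change (xn lam x1 1) with x1; lra|].
    intros n Hn. replace n with 1%nat by lia. change (xn lam x1 1) with x1.
    apply (period3_near_point a1); [left; auto|]. fold radius. rewrite Rabs_left; lra.
  - destruct (period3_below_a2 (a2 - x1) ltac:(fold radius; lra)) as [Hz Hzb].
    replace (a2 - (a2 - x1)) with x1 in Hz, Hzb by ring.
    destruct (period3_above_a3 (F lam x1 - a3) ltac:(fold radius; unfold L2 in *; nra)) as [Hv Hvb].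
    replace (a3 + (F lam x1 - a3)) with (F lam x1) in Hv, Hvb by ring.
    apply (Hrate x1 3%nat); [lia|rewrite Hx3; unfold L2 in *; nra|].
    intros n Hn. assert (n = 1 \/ n = 2 \/ n = 3)%nat as [-> | [-> | ->]] by lia.
    + change (xn lam x1 1) with x1.
      apply (period3_near_point a2); [right; left; auto|]. fold radius. rewrite Rabs_left; lra.
    + rewrite Hx2. apply (period3_near_point a3); [right; right; left; auto|].
      fold radius. rewrite Rabs_right; unfold L2 in *; nra.
    + rewrite Hx3. apply (period3_near_point a1); [left; auto|].
      fold radius. rewrite Rabs_left; unfold L2 in *; nra.
  - destruct (period3_above_a3 (x1 - a3) ltac:(fold radius; lra)) as [Hv Hvb].
    replace (a3 + (x1 - a3)) with x1 in Hv, Hvb by ring.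
    apply (Hrate x1 2%nat); [lia|rewrite Hx2; unfold L2 in *; nra|].
    intros n Hn. assert (n = 1 \/ n = 2)%nat as [-> | ->] by lia.
    + change (xn lam x1 1) with x1.
      apply (period3_near_point a3); [right; right; left; auto|]. fold radius. rewrite Rabs_right; lra.
    + rewrite Hx2. apply (period3_near_point a1); [left; auto|].
      fold radius. rewrite Rabs_left; unfold L2 in *; nra.
Qed.
End PeriodThree.

Lemma part_e : forall a1 a2 a3, 0 < a1 -> a1 < a2 -> a2 < a3 -> a3 < 1 ->
     F (1 + sqrt 8) a1 = a2 -> F (1 + sqrt 8) a2 = a3 -> F (1 + sqrt 8) a3 = a1 ->
     exists delta, 0 < delta /\ forall x1,
       (a1 - delta < x1 < a1 \/ a2 - delta < x1 < a2 \/ a3 < x1 < a3 + delta) ->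
       asymp_equiv (fun n => dist3 (xn (1 + sqrt 8) x1 n) a1 a2 a3)
                   (fun n => / INR n) /\
       box_dim (Sset (1 + sqrt 8) x1) (1/2) /\
       mink_nondegenerate (Sset (1 + sqrt 8) x1).
Proof.
  intros a1 a2 a3 H0 H12 H23 H31 F1 F2 F3.
  destruct (sqrt8_cycle a1 a2 a3 H0 H12 H23 H31 F1 F2 F3) as [[B1 [B2 B3]] Hprod].
  destruct sqrt8_bounds as [[Ht1 Ht2] _].
  destruct (sqrt8_cycle_signs (1 + sqrt 8) a1 a2 a3 ltac:(lra) B1 B2 B3) as [Hm1 [Hm2 [Hm3 HK]]].
  apply period3_rate; auto. lra.
Qed.

Theorem corollary1 :
  (* (a) *)
  (exists delta, 0 < delta /\ forall x1, 0 < x1 < delta ->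
     asymp_equiv (xn 1 x1) (fun n => / INR n) /\
     box_dim (Sset 1 x1) (1/2) /\ mink_nondegenerate (Sset 1 x1)) /\
  (* (b) *)
  (exists delta, 0 < delta /\ forall x1, 0 < Rabs (x1 - 2/3) < delta ->
     asymp_equiv (fun n => Rabs (xn 3 x1 n - 2/3)) (fun n => Rpower (INR n) (-1/2)) /\
     box_dim (Sset 3 x1) (2/3) /\ mink_nondegenerate (Sset 3 x1)) /\
  (* (c) *)
  (forall lam x1, 0 < lam <= 4 -> lam <> 1 -> lam <> 3 -> 0 < x1 < 1 ->
     (exists l, Un_cv (xn lam x1) l) ->
     box_dim (Sset lam x1) 0) /\
  (* (d) *)
  (forall a1 a2, a1 <> a2 ->
     F (1 + sqrt 6) a1 = a2 -> F (1 + sqrt 6) a2 = a1 ->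
     exists delta, 0 < delta /\ forall x1, x1 <> a1 -> x1 <> a2 ->
       dist2 x1 a1 a2 < delta ->
       asymp_equiv (fun n => dist2 (xn (1 + sqrt 6) x1 n) a1 a2)
                   (fun n => Rpower (INR n) (-1/2)) /\
       box_dim (Sset (1 + sqrt 6) x1) (2/3) /\
       mink_nondegenerate (Sset (1 + sqrt 6) x1)) /\
  (* (e) *)
  (forall a1 a2 a3, 0 < a1 -> a1 < a2 -> a2 < a3 -> a3 < 1 ->
     F (1 + sqrt 8) a1 = a2 -> F (1 + sqrt 8) a2 = a3 -> F (1 + sqrt 8) a3 = a1 ->
     exists delta, 0 < delta /\ forall x1,
       (a1 - delta < x1 < a1 \/ a2 - delta < x1 < a2 \/ a3 < x1 < a3 + delta) ->
       asymp_equiv (fun n => dist3 (xn (1 + sqrt 8) x1 n) a1 a2 a3)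
                   (fun n => / INR n) /\
       box_dim (Sset (1 + sqrt 8) x1) (1/2) /\
       mink_nondegenerate (Sset (1 + sqrt 8) x1)).
Proof.
  split; [exact part_a|]. split; [exact part_b|]. split; [exact part_c|].
  split; [exact part_d|exact part_e].
Qed.
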